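(* Consider an asymptotically polytropic equation of state whose asymptotic index at low pressure satisfies $0\le n_0\le 3$ (i.e. $\rho(p)=K p^{n_0/(n_0+1)}(1+O(p^{a_0/(n_0+1)}))$ as $p\to0$). Then every perfect fluid solution with positive mass, regular or not, has finite radius and finite total mass: there is $R<\infty$ with $p(r)>0$ for $r<R$ and $p(r)\to0$ as $r\to R$, and $M=\lim_{r\to R}m(r)<\infty$.
   Context: Equation of state: a barotropic relation $\rho=\rho(p)$, defined for $p\ge 0$, with $\rho>0$ for $p>0$, such that $\eta(p)=\int_0^p dp'/\rho(p')$ is finite for $p>0$; $\rho,p$ are regarded as functions of $\eta$. Index function: $n(\eta)=\frac{\eta}{\rho}\frac{d\rho}{d\eta}$. Asymptotically polytropic: $n$ is $C^1$ on $(0,\infty)$, bounded and non-negative on $[0,\infty]$, and $n(\eta)-n_0=O(\eta^{a_0})$ as $\eta\to0$, $n(\eta)-n_1=O(\eta^{-a_1})$ as $\eta\to\infty$ for some $n_0,n_1\ge0$, $a_0,a_1>0$. Perfect fluid solution: a solution $(m(r),p(r))$, $p>0$, of the Newtonian static spherically symmetric equations $dm/dr=4\pi r^2\rho(p)$, $dp/dr=-m\rho(p)/r^2$ (gravitational constant $1$), continued outward in $r$ as long as $p>0$. It is regular if $m(r)\to0$ and $p(r)\to p_c\in(0,\infty)$ as $r\to0$. ''Any perfect fluid solution'' here includes non-regular ones such as those with a point-mass singularity at $r=0$ and those that started with negative mass and reached $m=0$ at some radius, considered in the region where $m>0$. *)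

From Stdlib Require Import Reals.
From Coquelicot Require Import Coquelicot.
Open Scope R_scope.

Definition EOS (rho : R -> R) : Prop :=
  forall p, 0 < p -> 0 < rho p.

Definition is_eta (rho eta : R -> R) : Prop :=
  forall p, 0 < p ->
    is_RInt_gen (fun q => / rho q) (at_right 0) (at_point p) (eta p).

(* Index function n(eta) = (eta / rho) d rho / d eta, where rhoE is rho
   regarded as a function of eta. *)
Definition index_fun (rhoE : R -> R) (e : R) : R :=
  e / rhoE e * Derive rhoE e.

Definition asymptotically_polytropic (rho : R -> R) (n0 n1 a0 a1 : R) : Prop :=
  exists eta rhoE : R -> R,
    is_eta rho eta /\
    (forall p, 0 < p -> rhoE (eta p) = rho p) /\
    (* eta ranges over (0, oo), so that n is defined on (0, oo) *)
    (forall e, 0 < e -> exists p, 0 < p /\ eta p = e) /\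
    (forall e, 0 < e -> ex_derive rhoE e) /\
    (forall e, 0 < e ->
       ex_derive (index_fun rhoE) e /\ continuous (Derive (index_fun rhoE)) e) /\
    0 <= n0 /\ 0 <= n1 /\
    (exists B, forall e, 0 < e -> 0 <= index_fun rhoE e <= B) /\
    0 < a0 /\ 0 < a1 /\
    (exists C d, 0 < d /\ forall e, 0 < e < d ->
       Rabs (index_fun rhoE e - n0) <= C * Rpower e a0) /\
    (exists C E, forall e, E < e ->
       Rabs (index_fun rhoE e - n1) <= C * Rpower e (- a1)).

Definition fluid_solution (rho : R -> R) (m p : R -> R) (r0 : R) (Rb : Rbar)
  : Prop :=
  0 <= r0 /\ Rbar_lt r0 Rb /\
  forall r, r0 < r -> Rbar_lt r Rb ->
    0 < p r /\ 0 < m r /\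
    is_derive m r (4 * PI * r ^ 2 * rho (p r)) /\
    is_derive p r (- (m r * rho (p r)) / r ^ 2).

Definition maximal_fluid_solution (rho : R -> R) (m p : R -> R) (r0 : R)
  (Rb : Rbar) : Prop :=
  fluid_solution rho m p r0 Rb /\
  ~ (exists (m2 p2 : R -> R) (R2 : Rbar),
       Rbar_lt Rb R2 /\ fluid_solution rho m2 p2 r0 R2 /\
       forall r, r0 < r -> Rbar_lt r Rb -> m2 r = m r /\ p2 r = p r).

(* Suppose the radius is infinite and put E = eta(p) along the solution.  Then
   f = E - m / r is nonincreasing and (r E)' = f.  If f ever became negative, r E > 0 would
   reach 0 at a finite radius; so f >= 0, i.e. E >= m / r, and the low-pressure bound
   rho >= c E^3 (this is where n0 <= 3 enters) gives m' >= 4 pi c m^3 / r, which blows up at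
   a finite radius.  Hence the radius R is finite.  Below R the mass is increasing and
   bounded, so it converges; and if p stayed away from 0 near R, the Picard-Lindelof
   theorem would continue the solution past R, against maximality. *)

From Stdlib Require Import Reals Lra Psatz Classical.
From Coquelicot Require Import Coquelicot.
Open Scope R_scope.

Lemma incr_of_derive_nonneg (f df : R -> R) x y : x <= y ->
  (forall z, x <= z <= y -> is_derive f z (df z)) ->
  (forall z, x <= z <= y -> 0 <= df z) -> f x <= f y.
Proof.
  intros Hxy Hd Hpos.
  destruct (Req_dec x y) as [<-|Hne]; [lra|].
  destruct (MVT_gen f x y df) as [c [Hc Hmvt]];
    rewrite ?Rmin_left, ?Rmax_right in * by lra.
  - intros z Hz; apply Hd; lra.
  - intros z Hz; apply continuity_pt_filterlim, (ex_derive_continuous (V := R_NormedModule)).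
    exists (df z); apply Hd; lra.
  - specialize (Hpos c Hc); nra.
Qed.

Lemma decr_of_derive_nonpos (f df : R -> R) x y : x <= y ->
  (forall z, x <= z <= y -> is_derive f z (df z)) ->
  (forall z, x <= z <= y -> df z <= 0) -> f y <= f x.
Proof.
  intros Hxy Hd Hneg.
  enough (- f x <= - f y) by lra.
  apply (incr_of_derive_nonneg (fun z => - f z) (fun z => - df z)); auto.
  - intros z Hz; apply (is_derive_opp f), Hd, Hz.
  - intros z Hz; specialize (Hneg z Hz); lra.
Qed.

Lemma continuous_of_local_lipschitz (f : R -> R) x K d : 0 < d ->
  (forall y, Rabs (y - x) < d -> Rabs (f y - f x) <= K * Rabs (y - x)) ->
  continuous f x.
Proof.
  intros Hd Hlip; apply filterlim_locally; intros eps.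
  assert (HK : 0 < Rabs K + 1) by (pose proof (Rabs_pos K); lra).
  assert (Hr : 0 < Rmin d (eps / (Rabs K + 1)))
    by (apply Rmin_pos; [lra | apply Rdiv_lt_0_compat; [apply cond_pos | lra]]).
  exists (mkposreal _ Hr); intros y Hy.
  change (Rabs (y - x) < Rmin d (eps / (Rabs K + 1))) in Hy.
  change (Rabs (f y - f x) < eps).
  pose proof (Rmin_l d (eps / (Rabs K + 1))); pose proof (Rmin_r d (eps / (Rabs K + 1))).
  assert (Hy' : Rabs (y - x) * (Rabs K + 1) < eps).
  { apply (Rmult_lt_reg_r (/ (Rabs K + 1))); [apply Rinv_0_lt_compat; lra|].
    rewrite Rmult_assoc, Rinv_r, Rmult_1_r by lra; lra. }
  eapply Rle_lt_trans; [apply Hlip; lra|].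
  pose proof (Rle_abs K); pose proof (Rabs_pos (y - x)); nra.
Qed.

Lemma Rabs_le_between x c : Rabs x <= c -> - c <= x <= c.
Proof. unfold Rabs; destruct Rcase_abs; lra. Qed.

Lemma Rabs_triang3 u x y v : Rabs (u - v) <= Rabs (u - x) + Rabs (x - y) + Rabs (y - v).
Proof.
  pose proof (Rabs_triang (u - x) (x - v)); pose proof (Rabs_triang (x - y) (y - v)).
  replace (u - x + (x - v)) with (u - v) in * by ring.
  replace (x - y + (y - v)) with (x - v) in * by ring.
  lra.
Qed.

Lemma Rabs_mult_sub_le a b a' b' A B : Rabs a' <= A -> Rabs b <= B ->
  Rabs (a * b - a' * b') <= B * Rabs (a - a') + A * Rabs (b - b').
Proof.
  intros Ha Hb.
  replace (a * b - a' * b') with ((a - a') * b + a' * (b - b')) by ring.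
  eapply Rle_trans; [apply Rabs_triang|]; rewrite !Rabs_mult.
  pose proof (Rabs_pos (a - a')); pose proof (Rabs_pos (b - b')); nra.
Qed.

Lemma four_pi_sq_nonneg x : 0 <= 4 * PI * x ^ 2.
Proof. pose proof PI_RGT_0; pose proof (pow2_ge_0 x); nra. Qed.

Lemma filterlim_at_left_of_eps (f : R -> R) b l :
  (forall eps, 0 < eps -> exists x, x < b /\ forall y, x < y < b -> Rabs (f y - l) < eps) ->
  filterlim f (at_left b) (locally l).
Proof.
  intros H; apply filterlim_locally; intros eps.
  destruct (H eps (cond_pos eps)) as [x [Hxb Hx]].
  exists (mkposreal (b - x) ltac:(lra)); intros y Hy Hyb.
  change (Rabs (y - b) < b - x) in Hy; apply Rabs_def2 in Hy.
  apply Hx; lra.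
Qed.

Lemma locally_open_interval t lo hi : lo < t < hi -> locally t (fun y => lo < y < hi).
Proof.
  intros Ht; exists (mkposreal (Rmin (t - lo) (hi - t)) ltac:(apply Rmin_pos; lra)).
  intros y Hy; change (Rabs (y - t) < Rmin (t - lo) (hi - t)) in Hy; apply Rabs_def2 in Hy.
  pose proof (Rmin_l (t - lo) (hi - t)); pose proof (Rmin_r (t - lo) (hi - t)); lra.
Qed.

Lemma is_RInt_gen_at_right_unique (f : R -> R) a b l l' :
  is_RInt_gen f (at_right a) (at_point b) l -> is_RInt_gen f (at_right a) (at_point b) l' -> l = l'.
Proof.
  intros H H'.
  pose proof (Proper_StrongProper _ (at_right_proper_filter a)) as Ha.
  pose proof (Proper_StrongProper _ (at_point_filter b)) as Hb.
  eapply (filterlimi_locally_unique (F := filter_prod (at_right a) (at_point b)));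
    [| exact H | exact H'].
  apply filter_forall; intros ab y1 y2 Hy1 Hy2.
  now rewrite <- (is_RInt_unique _ _ _ _ Hy1), <- (is_RInt_unique _ _ _ _ Hy2).
Qed.

Lemma exists_nonpos_of_derive_le_neg (v dv : R -> R) a k : 0 < k ->
  (forall r, a <= r -> is_derive v r (dv r)) -> (forall r, a <= r -> dv r <= - k) ->
  exists r, a <= r /\ v r <= 0.
Proof.
  intros Hk Hd Hneg.
  set (r := a + Rabs (v a) / k).
  assert (Hr : a <= r)
    by (unfold r; pose proof (Rdiv_le_0_compat _ _ (Rabs_pos (v a)) Hk); lra).
  exists r; split; [exact Hr|].
  assert (Hdecr : v r + k * r <= v a + k * a).
  { apply (decr_of_derive_nonpos (fun s => v s + k * s) (fun s => dv s + k)); [exact Hr | |].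
    - intros s Hs; apply (is_derive_plus v (fun s => k * s)); [apply Hd; lra|].
      auto_derive; [easy | ring].
    - intros s Hs; specialize (Hneg s ltac:(lra)); lra. }
  assert (k * (r - a) = Rabs (v a)) by (unfold r; field; lra).
  pose proof (Rle_abs (v a)); lra.
Qed.

(* Integrating m' >= kappa m^3 / r gives 1 / m(R)^2 <= 1 / m(a)^2 - 2 kappa ln (R / a),
   which becomes negative for large R. *)
Lemma cubic_growth_blowup (m dm : R -> R) a kappa : 0 < a -> 0 < kappa ->
  (forall r, a <= r -> is_derive m r (dm r)) -> (forall r, a <= r -> 0 < m r) ->
  (forall r, a <= r -> kappa * m r ^ 3 / r <= dm r) -> False.
Proof.
  intros Ha Hk Hd Hpos Hgrowth.
  set (R1 := a * exp (/ (2 * kappa * m a ^ 2))).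
  assert (Hma : 0 < m a) by (apply Hpos; lra).
  assert (HR1 : a <= R1).
  { unfold R1; assert (1 <= exp (/ (2 * kappa * m a ^ 2))); [|nra].
    rewrite <- exp_0; left; apply exp_increasing, Rinv_0_lt_compat.
    apply Rmult_lt_0_compat; [lra | now apply pow_lt]. }
  assert (Hmono : - / m a ^ 2 - 2 * kappa * ln a <= - / m R1 ^ 2 - 2 * kappa * ln R1).
  { apply (incr_of_derive_nonneg (fun r => - / m r ^ 2 - 2 * kappa * ln r)
             (fun r => 2 * (dm r - kappa * m r ^ 3 / r) / m r ^ 3)); [exact HR1 | |].
    - intros r Hr; pose proof (Hpos r ltac:(lra)); pose proof (Hd r ltac:(lra)) as Dm.
      auto_derive.
      + repeat split; [now exists (dm r) | nra | lra].
      + replace (Derive (fun x => m x) r) with (dm r) by (symmetry; now apply is_derive_unique).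
        field; lra.
    - intros r Hr; pose proof (Hpos r ltac:(lra)); specialize (Hgrowth r (proj1 Hr)).
      apply Rdiv_le_0_compat; [lra | now apply pow_lt]. }
  assert (Hln : ln R1 = ln a + / (2 * kappa * m a ^ 2))
    by (unfold R1; rewrite ln_mult, ln_exp by (try apply exp_pos; lra); reflexivity).
  rewrite Hln in Hmono.
  assert (2 * kappa * (ln a + / (2 * kappa * m a ^ 2)) = 2 * kappa * ln a + / m a ^ 2)
    by (field; lra).
  assert (0 < / m R1 ^ 2) by (apply Rinv_0_lt_compat, pow_lt, Hpos; lra).
  lra.
Qed.

Lemma half_pow_small C eps : 0 < eps -> exists N, C * (1 / 2) ^ N < eps.
Proof.
  intros Heps; pose proof (Rabs_pos C) as HC.
  destruct (pow_lt_1_zero (1 / 2) ltac:(rewrite Rabs_right; lra) (eps / (Rabs C + 1))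
              ltac:(apply Rdiv_lt_0_compat; lra)) as [N HN].
  exists N; specialize (HN N (Nat.le_refl N)); rewrite Rabs_right in HN by (left; apply pow_lt; lra).
  assert (0 < (1 / 2) ^ N) by (apply pow_lt; lra).
  assert ((1 / 2) ^ N * (Rabs C + 1) < eps).
  { apply (Rmult_lt_reg_r (/ (Rabs C + 1))); [apply Rinv_0_lt_compat; lra|].
    rewrite Rmult_assoc, Rinv_r, Rmult_1_r by lra; exact HN. }
  pose proof (Rle_abs C); nra.
Qed.

Lemma le_of_le_add_geometric x y C : (forall k, x <= y + C * (1 / 2) ^ k) -> x <= y.
Proof.
  intros H; apply Rnot_lt_le; intros Hlt.
  destruct (half_pow_small C (x - y)) as [N HN]; [lra|].
  specialize (H N); lra.
Qed.

Lemma geometric_steps_tail_le (u : nat -> R) C :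
  (forall k, Rabs (u (S k) - u k) <= C * (1 / 2) ^ k) ->
  forall k j, Rabs (u (k + j)%nat - u k) <= 2 * C * (1 / 2) ^ k - 2 * C * (1 / 2) ^ (k + j).
Proof.
  intros Hstep k j; induction j as [|j IH].
  - rewrite Nat.add_0_r, Rminus_diag, Rabs_R0; lra.
  - rewrite Nat.add_succ_r.
    pose proof (Rabs_triang (u (S (k + j)) - u (k + j)%nat) (u (k + j)%nat - u k)).
    replace (u (S (k + j)) - u (k + j)%nat + (u (k + j)%nat - u k)) with (u (S (k + j)) - u k)
      in * by ring.
    specialize (Hstep (k + j)%nat); simpl (_ ^ S _); lra.
Qed.

Lemma Lim_seq_geometric_steps (u : nat -> R) C :
  (forall k, Rabs (u (S k) - u k) <= C * (1 / 2) ^ k) ->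
  forall k, Rabs (Lim_seq u - u k) <= 2 * C * (1 / 2) ^ k.
Proof.
  intros Hstep.
  assert (HC : 0 <= C)
    by (pose proof (Hstep 0%nat); pose proof (Rabs_pos (u 1%nat - u 0%nat)); simpl in *; lra).
  assert (Htail : forall k j, Rabs (u (k + j)%nat - u k) <= 2 * C * (1 / 2) ^ k)
    by (intros k j; pose proof (geometric_steps_tail_le u C Hstep k j);
        assert (0 <= C * (1 / 2) ^ (k + j)) by (apply Rmult_le_pos; [| apply pow_le]; lra);
        lra).
  assert (Hex : ex_finite_lim_seq u).
  { apply ex_lim_seq_cauchy_corr; intros eps.
    destruct (half_pow_small (4 * C) eps (cond_pos eps)) as [N HN].
    exists N; intros n n' Hn Hn'.
    pose proof (Htail N (n - N)%nat) as H1; pose proof (Htail N (n' - N)%nat) as H2.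
    replace (N + (n - N))%nat with n in H1 by lia; replace (N + (n' - N))%nat with n' in H2 by lia.
    pose proof (Rabs_triang3 (u n) (u N) (u N) (u n')) as Htri.
    rewrite Rminus_diag, Rabs_R0, (Rabs_minus_sym (u N)) in Htri.
    lra. }
  destruct Hex as [l Hlim]; rewrite (is_lim_seq_unique _ _ Hlim); intros k.
  assert (Hk : is_lim_seq (fun j => Rabs (u (j + k)%nat - u k)) (Rabs (l - u k))).
  { apply (is_lim_seq_abs _ (Finite (l - u k))), is_lim_seq_minus';
      [apply (is_lim_seq_incr_n u k), Hlim | apply is_lim_seq_const]. }
  refine (is_lim_seq_le _ (fun _ => 2 * C * (1 / 2) ^ k) _ _ _ Hk (is_lim_seq_const _)).
  intros j; rewrite Nat.add_comm; apply Htail.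
Qed.

Lemma filterlim_at_left_incr_bounded (f : R -> R) a b M : a < b ->
  (forall x y, a < x -> x <= y -> y < b -> f x <= f y) -> (forall x, a < x < b -> f x <= M) ->
  exists l, filterlim f (at_left b) (locally l).
Proof.
  intros Hab Hincr Hbound.
  set (E := fun v => exists x, a < x < b /\ v = f x).
  destruct (completeness E) as [l [Hub Hlub]].
  - exists M; intros v [x [Hx ->]]; now apply Hbound.
  - exists (f ((a + b) / 2)), ((a + b) / 2); split; [lra | easy].
  - exists l; apply filterlim_at_left_of_eps; intros eps Heps.
    destruct (classic (exists x, a < x < b /\ l - eps < f x)) as [[x [Hx Hfx]] | Hnone].
    + exists x; split; [lra|]; intros y Hy.
      assert (f x <= f y) by (apply Hincr; lra).
      assert (f y <= l) by (apply Hub; exists y; split; [lra | easy]).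
      apply Rabs_def1; lra.
    + enough (l <= l - eps) by lra.
      apply Hlub; intros v [x [Hx ->]]; apply Rnot_lt_le; intros Hlt; apply Hnone; now exists x.
Qed.

Definition clamp (lo hi t : R) := Rmax lo (Rmin hi t).

Lemma clamp_between lo hi t : lo <= hi -> lo <= clamp lo hi t <= hi.
Proof. intros H; unfold clamp, Rmax, Rmin; repeat destruct Rle_dec; lra. Qed.

Lemma clamp_id lo hi t : lo <= t <= hi -> clamp lo hi t = t.
Proof. intros H; unfold clamp, Rmax, Rmin; repeat destruct Rle_dec; lra. Qed.

Lemma clamp_lipschitz lo hi t t' : lo <= hi -> Rabs (clamp lo hi t - clamp lo hi t') <= Rabs (t - t').
Proof.
  intros H; unfold clamp, Rmax, Rmin; repeat destruct Rle_dec; unfold Rabs; repeat destruct Rcase_abs;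
    lra.
Qed.

Lemma clamp_continuous lo hi t : lo <= hi -> continuous (clamp lo hi) t.
Proof.
  intros H; apply (continuous_of_local_lipschitz _ t 1 1); [lra|].
  intros y _; rewrite Rmult_1_l; now apply clamp_lipschitz.
Qed.

Section PathIntegrand.

Variables (G : R -> R -> R -> R) (Gm K : R).
Hypothesis G_bounded : forall s x q, Rabs (G s x q) <= Gm.
Hypothesis G_lipschitz : forall s x q x' q',
  Rabs (G s x q - G s x' q') <= K * (Rabs (x - x') + Rabs (q - q')).
Hypothesis G_continuous : forall x q s, continuous (fun s => G s x q) s.

Lemma G_bound_nonneg : 0 <= Gm.
Proof. pose proof (G_bounded 0 0 0); pose proof (Rabs_pos (G 0 0 0)); lra. Qed.

Lemma G_lipschitz_nonneg : 0 <= K.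
Proof.
  pose proof (G_lipschitz 0 1 0 0 0); pose proof (Rabs_pos (G 0 1 0 - G 0 0 0)).
  rewrite Rminus_0_r, Rminus_diag, Rabs_R0, Rabs_R1 in *; lra.
Qed.

Lemma continuous_G_path (X Q : R -> R) t : continuous X t -> continuous Q t ->
  continuous (fun s => G s (X s) (Q s)) t.
Proof.
  intros HX HQ; apply filterlim_locally; intros eps.
  pose proof G_lipschitz_nonneg.
  set (d := eps / (4 * (K + 1))).
  assert (Hd : 0 < d) by (apply Rdiv_lt_0_compat; [apply cond_pos | lra]).
  assert (HKd : K * (2 * d) < eps / 2).
  { unfold d; replace (K * (2 * (eps / (4 * (K + 1))))) with (eps / 2 - eps / (2 * (K + 1)))
      by (field; lra).
    assert (0 < eps / (2 * (K + 1))) by (apply Rdiv_lt_0_compat; [apply cond_pos | lra]); lra. }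
  pose proof (proj1 (filterlim_locally _ _) (G_continuous (X t) (Q t) t) (pos_div_2 eps)) as Hs.
  pose proof (proj1 (filterlim_locally _ _) HX (mkposreal d Hd)) as Hx.
  pose proof (proj1 (filterlim_locally _ _) HQ (mkposreal d Hd)) as Hq.
  generalize (filter_and _ _ Hs (filter_and _ _ Hx Hq)); apply filter_imp.
  intros s (H1 & H2 & H3).
  change (Rabs (G s (X t) (Q t) - G t (X t) (Q t)) < eps / 2) in H1.
  change (Rabs (X s - X t) < d) in H2; change (Rabs (Q s - Q t) < d) in H3.
  change (Rabs (G s (X s) (Q s) - G t (X t) (Q t)) < eps).
  pose proof (G_lipschitz s (X s) (Q s) (X t) (Q t)).
  pose proof (Rabs_triang (G s (X s) (Q s) - G s (X t) (Q t)) (G s (X t) (Q t) - G t (X t) (Q t))).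
  replace (G s (X s) (Q s) - G s (X t) (Q t) + (G s (X t) (Q t) - G t (X t) (Q t)))
    with (G s (X s) (Q s) - G t (X t) (Q t)) in * by ring.
  assert (K * (Rabs (X s - X t) + Rabs (Q s - Q t)) <= K * (2 * d)) by (apply Rmult_le_compat_l; lra).
  lra.
Qed.

Definition continuous_on (f : R -> R) a b := forall s, a <= s <= b -> continuous f s.

Lemma ex_RInt_G_path (X Q : R -> R) a b : a <= b -> continuous_on X a b -> continuous_on Q a b ->
  ex_RInt (fun s => G s (X s) (Q s)) a b.
Proof.
  intros Hab HX HQ; apply (ex_RInt_continuous (V := R_CompleteNormedModule)).
  intros z Hz; rewrite Rmin_left, Rmax_right in Hz by lra.
  apply continuous_G_path; [apply HX | apply HQ]; lra.
Qed.

Lemma RInt_G_path_abs_le (X Q : R -> R) a b : a <= b -> continuous_on X a b -> continuous_on Q a b ->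
  Rabs (RInt (fun s => G s (X s) (Q s)) a b) <= (b - a) * Gm.
Proof.
  intros Hab HX HQ; apply abs_RInt_le_const; [exact Hab | now apply ex_RInt_G_path |].
  intros s _; apply G_bounded.
Qed.

Lemma RInt_G_path_contract (X Q Y Z : R -> R) a b delta : a <= b ->
  continuous_on X a b -> continuous_on Q a b -> continuous_on Y a b -> continuous_on Z a b ->
  (forall s, a <= s <= b -> Rabs (X s - Y s) + Rabs (Q s - Z s) <= delta) ->
  Rabs (RInt (fun s => G s (X s) (Q s)) a b - RInt (fun s => G s (Y s) (Z s)) a b)
    <= (b - a) * (K * delta).
Proof.
  intros Hab HX HQ HY HZ Hdelta; pose proof G_lipschitz_nonneg.
  rewrite <- (RInt_minus (V := R_CompleteNormedModule)) by now apply ex_RInt_G_path.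
  apply abs_RInt_le_const;
    [exact Hab | apply (ex_RInt_minus (V := R_CompleteNormedModule)); now apply ex_RInt_G_path|].
  intros s Hs; eapply Rle_trans; [apply G_lipschitz | apply Rmult_le_compat_l; auto].
Qed.

Lemma RInt_G_path_lipschitz (X Q : R -> R) a t t' :
  (forall s, continuous X s) -> (forall s, continuous Q s) ->
  Rabs (RInt (fun s => G s (X s) (Q s)) a t - RInt (fun s => G s (X s) (Q s)) a t')
    <= Gm * Rabs (t - t').
Proof.
  intros HX HQ.
  assert (Hex : forall u v, ex_RInt (fun s => G s (X s) (Q s)) u v)
    by (intros u v; apply (ex_RInt_continuous (V := R_CompleteNormedModule));
        intros; now apply continuous_G_path).
  rewrite <- (RInt_Chasles (V := R_CompleteNormedModule) _ a t' t) by apply Hex.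
  change (Rabs (RInt (fun s => G s (X s) (Q s)) a t' + RInt (fun s => G s (X s) (Q s)) t' t
                - RInt (fun s => G s (X s) (Q s)) a t') <= Gm * Rabs (t - t')).
  rewrite Rplus_minus_l, Rmult_comm.
  apply (norm_RInt_le_const_abs (V := R_NormedModule) (fun s => G s (X s) (Q s)) t' t);
    [intros; apply G_bounded | apply (RInt_correct (V := R_CompleteNormedModule)), Hex].
Qed.

Lemma integral_eq_of_derive (f X Q : R -> R) a b : a <= b ->
  continuous_on X a b -> continuous_on Q a b ->
  (forall s, a <= s <= b -> is_derive f s (G s (X s) (Q s))) ->
  f b = f a + RInt (fun s => G s (X s) (Q s)) a b.
Proof.
  intros Hab HX HQ Hd.
  pose proof (is_RInt_derive (V := R_CompleteNormedModule) f (fun s => G s (X s) (Q s)) a b) as HI.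
  rewrite Rmin_left, Rmax_right in HI by lra.
  rewrite (is_RInt_unique _ _ _ _
             (HI Hd ltac:(intros s Hs; apply continuous_G_path; [apply HX | apply HQ]; lra))).
  change (f b = f a + (f b - f a)); ring.
Qed.

Lemma is_derive_RInt_G_path (X Q : R -> R) c a t :
  (forall s, continuous X s) -> (forall s, continuous Q s) ->
  is_derive (fun y => c + RInt (fun s => G s (X s) (Q s)) a y) t (G t (X t) (Q t)).
Proof.
  intros HX HQ.
  assert (HI : is_derive (fun y => RInt (fun s => G s (X s) (Q s)) a y) t (G t (X t) (Q t))).
  { apply (is_derive_RInt (fun s => G s (X s) (Q s)) _ a t); [|now apply continuous_G_path].
    apply filter_forall; intros y; apply (RInt_correct (V := R_CompleteNormedModule)).
    apply (ex_RInt_continuous (V := R_CompleteNormedModule)); intros; now apply continuous_G_path. }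
  replace (G t (X t) (Q t)) with (plus 0 (G t (X t) (Q t))) by (unfold plus; simpl; ring).
  apply (is_derive_plus (fun _ => c)); [|exact HI].
  exact (is_derive_const (K := R_AbsRing) (V := R_NormedModule) c t).
Qed.

End PathIntegrand.

Section Picard.

Variables (G1 G2 : R -> R -> R -> R) (Gm K a x0 q0 h : R).
Hypothesis G1_bounded : forall s x q, Rabs (G1 s x q) <= Gm.
Hypothesis G2_bounded : forall s x q, Rabs (G2 s x q) <= Gm.
Hypothesis G1_lipschitz : forall s x q x' q',
  Rabs (G1 s x q - G1 s x' q') <= K * (Rabs (x - x') + Rabs (q - q')).
Hypothesis G2_lipschitz : forall s x q x' q',
  Rabs (G2 s x q - G2 s x' q') <= K * (Rabs (x - x') + Rabs (q - q')).
Hypothesis G1_continuous : forall x q s, continuous (fun s => G1 s x q) s.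
Hypothesis G2_continuous : forall x q s, continuous (fun s => G2 s x q) s.
Hypothesis h_pos : 0 < h.
(* makes picard_step halve the sum of the distances of the two components *)
Hypothesis Kh_le : K * h <= 1 / 4.

Definition picard_step (XQ : (R -> R) * (R -> R)) : (R -> R) * (R -> R) :=
  (fun t => x0 + RInt (fun s => G1 s (fst XQ s) (snd XQ s)) a t,
   fun t => q0 + RInt (fun s => G2 s (fst XQ s) (snd XQ s)) a t).

Definition picard_iter (k : nat) := Nat.iter k picard_step (fun _ => x0, fun _ => q0).

Definition pair_dist (XQ YZ : (R -> R) * (R -> R)) t :=
  Rabs (fst XQ t - fst YZ t) + Rabs (snd XQ t - snd YZ t).

Definition pair_continuous_on (XQ : (R -> R) * (R -> R)) b :=
  continuous_on (fst XQ) a b /\ continuous_on (snd XQ) a b.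

Lemma pair_dist_nonneg XQ YZ t : 0 <= pair_dist XQ YZ t.
Proof.
  unfold pair_dist; pose proof (Rabs_pos (fst XQ t - fst YZ t)).
  pose proof (Rabs_pos (snd XQ t - snd YZ t)); lra.
Qed.

Lemma pair_dist_sym XQ YZ t : pair_dist XQ YZ t = pair_dist YZ XQ t.
Proof. unfold pair_dist; now rewrite (Rabs_minus_sym (fst XQ t)), (Rabs_minus_sym (snd XQ t)). Qed.

Lemma pair_dist_triang XQ YZ UV t : pair_dist XQ UV t <= pair_dist XQ YZ t + pair_dist YZ UV t.
Proof.
  unfold pair_dist.
  pose proof (Rabs_triang (fst XQ t - fst YZ t) (fst YZ t - fst UV t)).
  pose proof (Rabs_triang (snd XQ t - snd YZ t) (snd YZ t - snd UV t)).
  replace (fst XQ t - fst YZ t + (fst YZ t - fst UV t)) with (fst XQ t - fst UV t) in * by ring.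
  replace (snd XQ t - snd YZ t + (snd YZ t - snd UV t)) with (snd XQ t - snd UV t) in * by ring.
  lra.
Qed.

Lemma pair_dist_eq_0 XQ YZ t : pair_dist XQ YZ t <= 0 -> fst XQ t = fst YZ t /\ snd XQ t = snd YZ t.
Proof.
  unfold pair_dist; intros H.
  pose proof (Rabs_pos (fst XQ t - fst YZ t)); pose proof (Rabs_pos (snd XQ t - snd YZ t)).
  split; apply Rminus_diag_uniq, Rabs_eq_0; lra.
Qed.

Lemma pair_continuous_on_le XQ b b' : b' <= b -> pair_continuous_on XQ b -> pair_continuous_on XQ b'.
Proof. intros Hb [HX HQ]; split; intros s Hs; [apply HX | apply HQ]; lra. Qed.

Lemma picard_step_lipschitz XQ t t' :
  (forall s, continuous (fst XQ) s /\ continuous (snd XQ) s) ->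
  Rabs (fst (picard_step XQ) t - fst (picard_step XQ) t') <= Gm * Rabs (t - t') /\
  Rabs (snd (picard_step XQ) t - snd (picard_step XQ) t') <= Gm * Rabs (t - t').
Proof.
  intros HXQ; simpl; rewrite !Rminus_plus_l_l.
  assert (HX : forall s, continuous (fst XQ) s) by (intros s; exact (proj1 (HXQ s))).
  assert (HQ : forall s, continuous (snd XQ) s) by (intros s; exact (proj2 (HXQ s))).
  split; [apply (RInt_G_path_lipschitz G1 Gm K) | apply (RInt_G_path_lipschitz G2 Gm K)]; auto.
Qed.

Lemma pair_continuous_on_of_continuous XQ b :
  (forall s, continuous (fst XQ) s /\ continuous (snd XQ) s) -> pair_continuous_on XQ b.
Proof. intros H; split; intros s _; [exact (proj1 (H s)) | exact (proj2 (H s))]. Qed.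

Lemma picard_iter_continuous k t :
  continuous (fst (picard_iter k)) t /\ continuous (snd (picard_iter k)) t.
Proof.
  revert t; induction k as [|k IH]; intros t.
  - split; apply continuous_const.
  - split; apply (continuous_of_local_lipschitz _ t Gm 1); [lra | | lra |];
      intros y _; apply (picard_step_lipschitz (picard_iter k) y t IH).
Qed.

Lemma picard_iter_continuous_on k b : pair_continuous_on (picard_iter k) b.
Proof. exact (pair_continuous_on_of_continuous _ b (picard_iter_continuous k)). Qed.

Lemma picard_iter_lipschitz k t t' :
  Rabs (fst (picard_iter k) t - fst (picard_iter k) t') <= Gm * Rabs (t - t') /\
  Rabs (snd (picard_iter k) t - snd (picard_iter k) t') <= Gm * Rabs (t - t').
Proof.
  destruct k as [|k].
  - pose proof (G_bound_nonneg G1 Gm G1_bounded); pose proof (Rabs_pos (t - t')).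
    simpl; rewrite !Rminus_diag, !Rabs_R0; split; nra.
  - exact (picard_step_lipschitz (picard_iter k) t t' (picard_iter_continuous k)).
Qed.

Lemma picard_step_contract XQ YZ b delta : b <= a + h ->
  pair_continuous_on XQ b -> pair_continuous_on YZ b ->
  (forall s, a <= s <= b -> pair_dist XQ YZ s <= delta) ->
  forall t, a <= t <= b -> pair_dist (picard_step XQ) (picard_step YZ) t <= delta / 2.
Proof.
  intros Hb HXQ HYZ Hdelta t Ht.
  destruct (pair_continuous_on_le XQ b t ltac:(lra) HXQ) as [HX HQ].
  destruct (pair_continuous_on_le YZ b t ltac:(lra) HYZ) as [HY HZ].
  assert (Hd : forall s, a <= s <= t -> Rabs (fst XQ s - fst YZ s) + Rabs (snd XQ s - snd YZ s) <= delta)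
    by (intros s Hs; apply Hdelta; lra).
  pose proof (RInt_G_path_contract G1 K G1_lipschitz G1_continuous _ _ _ _ a t delta
                ltac:(lra) HX HQ HY HZ Hd).
  pose proof (RInt_G_path_contract G2 K G2_lipschitz G2_continuous _ _ _ _ a t delta
                ltac:(lra) HX HQ HY HZ Hd).
  pose proof (G_lipschitz_nonneg G1 K G1_lipschitz).
  assert (Hdelta0 : 0 <= delta) by (eapply Rle_trans; [apply pair_dist_nonneg | apply (Hdelta a)]; lra).
  assert ((t - a) * (K * delta) <= delta / 4).
  { replace ((t - a) * (K * delta)) with ((t - a) * K * delta) by ring.
    assert ((t - a) * K <= 1 / 4)
      by (apply Rle_trans with (h * K); [apply Rmult_le_compat_r | rewrite Rmult_comm]; lra).
    apply Rle_trans with (1 / 4 * delta); [apply Rmult_le_compat_r|]; lra. }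
  unfold pair_dist; simpl; rewrite !Rminus_plus_l_l; lra.
Qed.

Lemma picard_step_initial_le XQ t : a <= t <= a + h -> pair_continuous_on XQ t ->
  Rabs (fst (picard_step XQ) t - x0) + Rabs (snd (picard_step XQ) t - q0) <= 2 * Gm * h.
Proof.
  intros Ht [HX HQ]; simpl; rewrite !Rplus_minus_l.
  pose proof (RInt_G_path_abs_le G1 Gm K G1_bounded G1_lipschitz G1_continuous _ _ a t ltac:(lra) HX HQ).
  pose proof (RInt_G_path_abs_le G2 Gm K G2_bounded G2_lipschitz G2_continuous _ _ a t ltac:(lra) HX HQ).
  pose proof (G_bound_nonneg G1 Gm G1_bounded).
  assert ((t - a) * Gm <= h * Gm) by (apply Rmult_le_compat_r; lra).
  lra.
Qed.

Lemma picard_iter_step_le k t : a <= t <= a + h ->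
  pair_dist (picard_iter (S k)) (picard_iter k) t <= 2 * Gm * h * (1 / 2) ^ k.
Proof.
  revert t; induction k as [|k IH]; intros t Ht.
  - rewrite pow_O, Rmult_1_r.
    exact (picard_step_initial_le (picard_iter 0) t Ht (picard_iter_continuous_on 0 t)).
  - replace (2 * Gm * h * (1 / 2) ^ S k) with (2 * Gm * h * (1 / 2) ^ k / 2) by (simpl; field).
    apply (picard_step_contract (picard_iter (S k)) (picard_iter k) (a + h));
      [lra | apply picard_iter_continuous_on | apply picard_iter_continuous_on | exact IH | exact Ht].
Qed.

(* The iterates converge on [a, a + h]; freezing the limit outside keeps it globally Lipschitz. *)
Definition picard_sol : (R -> R) * (R -> R) :=
  (fun t => real (Lim_seq (fun k => fst (picard_iter k) (clamp a (a + h) t))),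
   fun t => real (Lim_seq (fun k => snd (picard_iter k) (clamp a (a + h) t)))).

Lemma picard_sol_approx k t : a <= t <= a + h ->
  pair_dist picard_sol (picard_iter k) t <= 8 * Gm * h * (1 / 2) ^ k.
Proof.
  intros Ht; unfold pair_dist, picard_sol; simpl; rewrite clamp_id by exact Ht.
  pose proof (Lim_seq_geometric_steps (fun k => fst (picard_iter k) t) (2 * Gm * h)) as HX.
  pose proof (Lim_seq_geometric_steps (fun k => snd (picard_iter k) t) (2 * Gm * h)) as HQ.
  enough (Rabs (Lim_seq (fun k => fst (picard_iter k) t) - fst (picard_iter k) t)
            <= 2 * (2 * Gm * h) * (1 / 2) ^ k /\
          Rabs (Lim_seq (fun k => snd (picard_iter k) t) - snd (picard_iter k) t)
            <= 2 * (2 * Gm * h) * (1 / 2) ^ k)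
    by lra.
  split; [apply HX | apply HQ]; intros j; pose proof (picard_iter_step_le j t Ht); unfold pair_dist in *;
    pose proof (Rabs_pos (fst (picard_iter (S j)) t - fst (picard_iter j) t));
    pose proof (Rabs_pos (snd (picard_iter (S j)) t - snd (picard_iter j) t)); lra.
Qed.

Lemma picard_sol_clamp t :
  fst picard_sol t = fst picard_sol (clamp a (a + h) t) /\
  snd picard_sol t = snd picard_sol (clamp a (a + h) t).
Proof.
  unfold picard_sol; simpl.
  now rewrite (clamp_id a (a + h) (clamp a (a + h) t)) by (apply clamp_between; lra).
Qed.

Lemma picard_sol_lipschitz_on c c' : a <= c <= a + h -> a <= c' <= a + h ->
  Rabs (fst picard_sol c - fst picard_sol c') <= Gm * Rabs (c - c') /\
  Rabs (snd picard_sol c - snd picard_sol c') <= Gm * Rabs (c - c').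
Proof.
  intros Hc Hc'.
  assert (Hk : forall k,
    Rabs (fst picard_sol c - fst picard_sol c') <= Gm * Rabs (c - c') + 16 * Gm * h * (1 / 2) ^ k /\
    Rabs (snd picard_sol c - snd picard_sol c') <= Gm * Rabs (c - c') + 16 * Gm * h * (1 / 2) ^ k).
  { intros k; pose proof (picard_sol_approx k c Hc) as A; pose proof (picard_sol_approx k c' Hc') as A'.
    destruct (picard_iter_lipschitz k c c') as [L1 L2]; unfold pair_dist in A, A'.
    pose proof (Rabs_triang3 (fst picard_sol c) (fst (picard_iter k) c) (fst (picard_iter k) c')
                  (fst picard_sol c')).
    pose proof (Rabs_triang3 (snd picard_sol c) (snd (picard_iter k) c) (snd (picard_iter k) c')
                  (snd picard_sol c')).
    rewrite (Rabs_minus_sym (fst (picard_iter k) c')), (Rabs_minus_sym (snd (picard_iter k) c')) in *.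
    pose proof (Rabs_pos (fst picard_sol c - fst (picard_iter k) c)).
    pose proof (Rabs_pos (snd picard_sol c - snd (picard_iter k) c)).
    pose proof (Rabs_pos (fst picard_sol c' - fst (picard_iter k) c')).
    pose proof (Rabs_pos (snd picard_sol c' - snd (picard_iter k) c')).
    split; lra. }
  split; apply (le_of_le_add_geometric _ _ (16 * Gm * h)); intros k; apply Hk.
Qed.

Lemma picard_sol_lipschitz t t' :
  Rabs (fst picard_sol t - fst picard_sol t') <= Gm * Rabs (t - t') /\
  Rabs (snd picard_sol t - snd picard_sol t') <= Gm * Rabs (t - t').
Proof.
  pose proof (G_bound_nonneg G1 Gm G1_bounded).
  assert (Hscale : Gm * Rabs (clamp a (a + h) t - clamp a (a + h) t') <= Gm * Rabs (t - t'))
    by (apply Rmult_le_compat_l, clamp_lipschitz; lra).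
  destruct (picard_sol_clamp t) as [-> ->]; destruct (picard_sol_clamp t') as [-> ->].
  destruct (picard_sol_lipschitz_on (clamp a (a + h) t) (clamp a (a + h) t'));
    try (apply clamp_between; lra).
  split; lra.
Qed.

Lemma picard_sol_continuous t : continuous (fst picard_sol) t /\ continuous (snd picard_sol) t.
Proof.
  split; apply (continuous_of_local_lipschitz _ t Gm 1); [lra | | lra |];
    intros y _; apply picard_sol_lipschitz.
Qed.

Lemma picard_sol_continuous_on b : pair_continuous_on picard_sol b.
Proof. exact (pair_continuous_on_of_continuous _ b picard_sol_continuous). Qed.

Definition picard_fixed (XQ : (R -> R) * (R -> R)) b :=
  forall t, a <= t <= b -> fst XQ t = fst (picard_step XQ) t /\ snd XQ t = snd (picard_step XQ) t.

Lemma picard_sol_fixed : picard_fixed picard_sol (a + h).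
Proof.
  intros t Ht; apply pair_dist_eq_0, (le_of_le_add_geometric _ _ (8 * Gm * h)); intros k.
  pose proof (picard_sol_approx (S k) t Ht) as H1.
  assert (H2 : pair_dist (picard_iter (S k)) (picard_step picard_sol) t <= 8 * Gm * h * (1 / 2) ^ k / 2).
  { apply (picard_step_contract (picard_iter k) picard_sol (a + h));
      [lra | apply picard_iter_continuous_on | apply picard_sol_continuous_on | | exact Ht].
    intros s Hs; rewrite pair_dist_sym; now apply picard_sol_approx. }
  pose proof (pair_dist_triang picard_sol (picard_iter (S k)) (picard_step picard_sol) t).
  simpl (_ ^ S k) in H1; lra.
Qed.

Lemma picard_fixed_dist XQ YZ b t : picard_fixed XQ b -> picard_fixed YZ b -> a <= t <= b ->
  pair_dist XQ YZ t = pair_dist (picard_step XQ) (picard_step YZ) t.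
Proof.
  intros HX HY Ht; unfold pair_dist.
  now destruct (HX t Ht) as [-> ->]; destruct (HY t Ht) as [-> ->].
Qed.

Lemma picard_fixed_unique XQ YZ b : b <= a + h ->
  pair_continuous_on XQ b -> pair_continuous_on YZ b -> picard_fixed XQ b -> picard_fixed YZ b ->
  forall t, a <= t <= b -> fst XQ t = fst YZ t /\ snd XQ t = snd YZ t.
Proof.
  intros Hb HXQ HYZ HfixX HfixY.
  assert (Hk : forall k t, a <= t <= b -> pair_dist XQ YZ t <= 4 * Gm * h * (1 / 2) ^ k).
  { induction k as [|k IH]; intros t Ht; rewrite (picard_fixed_dist XQ YZ b t HfixX HfixY Ht).
    - rewrite pow_O, Rmult_1_r.
      pose proof (picard_step_initial_le XQ t ltac:(lra) (pair_continuous_on_le XQ b t ltac:(lra) HXQ)).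
      pose proof (picard_step_initial_le YZ t ltac:(lra) (pair_continuous_on_le YZ b t ltac:(lra) HYZ)).
      unfold pair_dist.
      pose proof (Rabs_triang3 (fst (picard_step XQ) t) x0 x0 (fst (picard_step YZ) t)).
      pose proof (Rabs_triang3 (snd (picard_step XQ) t) q0 q0 (snd (picard_step YZ) t)).
      rewrite Rminus_diag, Rabs_R0, (Rabs_minus_sym x0) in *.
      rewrite (Rabs_minus_sym q0) in *.
      lra.
    - replace (4 * Gm * h * (1 / 2) ^ S k) with (4 * Gm * h * (1 / 2) ^ k / 2) by (simpl; field).
      now apply (picard_step_contract _ _ b). }
  intros t Ht; apply pair_dist_eq_0, (le_of_le_add_geometric _ _ (4 * Gm * h)); intros k.
  rewrite Rplus_0_l; now apply Hk.
Qed.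

Lemma picard_sol_derive t : a < t < a + h ->
  is_derive (fst picard_sol) t (G1 t (fst picard_sol t) (snd picard_sol t)) /\
  is_derive (snd picard_sol) t (G2 t (fst picard_sol t) (snd picard_sol t)).
Proof.
  intros Ht.
  assert (Hloc : locally t (fun y => fst (picard_step picard_sol) y = fst picard_sol y /\
                                     snd (picard_step picard_sol) y = snd picard_sol y)).
  { generalize (locally_open_interval t a (a + h) Ht); apply filter_imp.
    intros y Hy; destruct (picard_sol_fixed y ltac:(lra)); split; congruence. }
  assert (HX : forall s, continuous (fst picard_sol) s)
    by (intros s; exact (proj1 (picard_sol_continuous s))).
  assert (HQ : forall s, continuous (snd picard_sol) s)
    by (intros s; exact (proj2 (picard_sol_continuous s))).
  split.
  - apply (is_derive_ext_loc (fst (picard_step picard_sol))); [eapply filter_imp; [|exact Hloc]; tauto|].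
    exact (is_derive_RInt_G_path G1 K G1_lipschitz G1_continuous _ _ x0 a t HX HQ).
  - apply (is_derive_ext_loc (snd (picard_step picard_sol))); [eapply filter_imp; [|exact Hloc]; tauto|].
    exact (is_derive_RInt_G_path G2 K G2_lipschitz G2_continuous _ _ q0 a t HX HQ).
Qed.

End Picard.

Section EquationOfState.

Variables (rho eta rhoE : R -> R) (B : R).
Hypothesis rho_pos : EOS rho.
Hypothesis eta_def : is_eta rho eta.
Hypothesis rhoE_eta : forall p, 0 < p -> rhoE (eta p) = rho p.
Hypothesis eta_onto : forall e, 0 < e -> exists p, 0 < p /\ eta p = e.
Hypothesis rhoE_derivable : forall e, 0 < e -> ex_derive rhoE e.
Hypothesis index_bounds : forall e, 0 < e -> 0 <= index_fun rhoE e <= B.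

Lemma eta_approx q eps b : 0 < q -> 0 < eps -> 0 < b ->
  exists a y, 0 < a < b /\ is_RInt (fun x => / rho x) a q y /\ Rabs (y - eta q) < eps.
Proof.
  intros Hq Heps Hb.
  destruct (eta_def q Hq (ball (eta q) (mkposreal eps Heps)) (locally_ball _ _))
    as [P Q [d Hd] HQ HPQ].
  set (a := Rmin d b / 2).
  assert (Ha : 0 < a < Rmin d b)
    by (unfold a; assert (0 < Rmin d b) by (apply Rmin_pos; [apply cond_pos | lra]); lra).
  pose proof (Rmin_l d b); pose proof (Rmin_r d b).
  destruct (HPQ a q) as [y [Hy Hball]]; [| exact HQ |].
  - apply Hd; [change (Rabs (a - 0) < d); rewrite Rminus_0_r, Rabs_right|]; lra.
  - exists a, y; repeat split; auto; lra.
Qed.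

Lemma eta_nonneg q : 0 < q -> 0 <= eta q.
Proof.
  intros Hq; apply Rnot_lt_le; intros Hneg.
  destruct (eta_approx q (- eta q) q) as (a & y & Ha & Hy & Hclose); try lra.
  enough (0 <= y) by (apply Rabs_def2 in Hclose; lra).
  apply (is_RInt_ge_0 (fun x => / rho x) a q y); [lra | exact Hy|].
  intros x Hx; left; apply Rinv_0_lt_compat, rho_pos; lra.
Qed.

Lemma is_RInt_eta_le q1 q2 : 0 < q1 -> q1 <= q2 ->
  is_RInt (fun x => / rho x) q1 q2 (eta q2 - eta q1).
Proof.
  intros Hq1 Hle.
  destruct (eta_approx q2 1 q1) as (a & y & Ha & Hy & _); try lra.
  assert (Hex : ex_RInt (fun x => / rho x) q1 q2)
    by (apply (ex_RInt_Chasles_2 (V := R_CompleteNormedModule) _ a); [lra | now exists y]).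
  destruct Hex as [I HI].
  assert (Hgen : is_RInt_gen (fun x => / rho x) (at_right 0) (at_point q2) (plus (eta q1) I))
    by (apply (is_RInt_gen_Chasles (V := R_NormedModule) _ q1);
        [exact (eta_def q1 Hq1) | now apply is_RInt_gen_at_point]).
  pose proof (is_RInt_gen_at_right_unique _ _ _ _ _ Hgen (eta_def q2 ltac:(lra))) as HI'.
  unfold plus in HI'; simpl in HI'.
  replace (eta q2 - eta q1) with I by lra.
  exact HI.
Qed.

Lemma is_RInt_eta q1 q2 : 0 < q1 -> 0 < q2 ->
  is_RInt (fun x => / rho x) q1 q2 (eta q2 - eta q1).
Proof.
  intros Hq1 Hq2; destruct (Rle_lt_dec q1 q2) as [|Hlt]; [now apply is_RInt_eta_le|].
  replace (eta q2 - eta q1) with (opp (eta q1 - eta q2)) by (unfold opp; simpl; ring).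
  apply (is_RInt_swap (V := R_NormedModule)), is_RInt_eta_le; lra.
Qed.

Lemma eta_incr q1 q2 : 0 < q1 -> q1 <= q2 -> eta q1 <= eta q2.
Proof.
  intros Hq1 Hq12.
  enough (0 <= eta q2 - eta q1) by lra.
  apply (is_RInt_ge_0 _ q1 q2 _ Hq12 (is_RInt_eta q1 q2 Hq1 ltac:(lra))).
  intros x Hx; left; apply Rinv_0_lt_compat, rho_pos; lra.
Qed.

(* If eta vanished at q it would vanish on (0, q], making rho constant there and
   the integral of 1 / rho over [q/2, q] positive rather than 0. *)
Lemma eta_pos q : 0 < q -> 0 < eta q.
Proof.
  intros Hq; apply Rnot_le_lt; intros Hle.
  assert (Hzero : forall x, q / 2 <= x <= q -> eta x = 0).
  { intros x Hx; pose proof (eta_nonneg x ltac:(lra)).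
    pose proof (eta_incr x q ltac:(lra) ltac:(lra)); lra. }
  assert (Hconst : is_RInt (fun x => / rho x) (q / 2) q (scal (q - q / 2) (/ rhoE 0))).
  { apply (is_RInt_ext (fun _ => / rhoE 0)); [|apply (is_RInt_const (V := R_NormedModule))].
    intros x Hx; rewrite Rmin_left, Rmax_right in Hx by lra.
    rewrite <- rhoE_eta, Hzero by lra; reflexivity. }
  pose proof (is_RInt_unique _ _ _ _ (is_RInt_eta (q / 2) q ltac:(lra) Hq)) as H1.
  rewrite (is_RInt_unique _ _ _ _ Hconst), Hzero, (Hzero (q / 2)) in H1 by lra.
  assert (H0 : 0 < rhoE 0)
    by (replace (rhoE 0) with (rho q) by (rewrite <- rhoE_eta, Hzero by lra; reflexivity);
        now apply rho_pos).
  unfold scal in H1; simpl in H1; unfold mult in H1; simpl in H1.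
  assert (0 < (q - q / 2) * / rhoE 0) by (apply Rmult_lt_0_compat; [lra | now apply Rinv_0_lt_compat]).
  lra.
Qed.

Lemma rhoE_pos e : 0 < e -> 0 < rhoE e.
Proof. intros He; destruct (eta_onto e He) as [p [Hp <-]]; rewrite rhoE_eta; auto. Qed.

Lemma is_derive_rhoE e : 0 < e -> is_derive rhoE e (index_fun rhoE e * rhoE e / e).
Proof.
  intros He; pose proof (rhoE_pos e He).
  replace (index_fun rhoE e * rhoE e / e) with (Derive rhoE e)
    by (unfold index_fun; field; lra).
  now apply Derive_correct, rhoE_derivable.
Qed.

Lemma rhoE_incr e1 e2 : 0 < e1 -> e1 <= e2 -> rhoE e1 <= rhoE e2.
Proof.
  intros He1 He12.
  apply (incr_of_derive_nonneg _ (fun e => index_fun rhoE e * rhoE e / e)); [lra | |].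
  - intros e He; apply is_derive_rhoE; lra.
  - intros e He; destruct (index_bounds e ltac:(lra)); pose proof (rhoE_pos e ltac:(lra)).
    apply Rdiv_le_0_compat; nra.
Qed.

Lemma rho_incr q1 q2 : 0 < q1 -> q1 <= q2 -> rho q1 <= rho q2.
Proof.
  intros Hq1 Hq12; rewrite <- !rhoE_eta by lra.
  apply rhoE_incr; [now apply eta_pos | now apply eta_incr].
Qed.

Lemma eta_sub_le x y : 0 < x -> x <= y -> eta y - eta x <= (y - x) / rho x.
Proof.
  intros Hx Hxy.
  pose proof (is_RInt_const (V := R_NormedModule) x y (/ rho x)) as Hc.
  unfold scal in Hc; simpl in Hc; unfold mult in Hc; simpl in Hc.
  apply (is_RInt_le _ _ x y _ _ Hxy (is_RInt_eta x y Hx ltac:(lra)) Hc).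
  intros t Ht; apply Rinv_le_contravar; [now apply rho_pos | apply rho_incr; lra].
Qed.

(* On [q1, q2] the chain rule bounds rho' by n rhoE / eta <= B rho q2 / eta q1
   and eta' = 1 / rho <= 1 / rho q1. *)
Definition rho_lip_const (q1 q2 : R) := B * rho q2 / (eta q1 * rho q1).

Lemma B_nonneg : 0 <= B.
Proof. destruct (index_bounds 1); lra. Qed.

Lemma rho_lip_const_nonneg q1 q2 : 0 < q1 -> q1 <= q2 -> 0 <= rho_lip_const q1 q2.
Proof.
  intros Hq1 Hq12; pose proof B_nonneg; pose proof (eta_pos q1 Hq1).
  pose proof (rho_pos q1 Hq1); pose proof (rho_pos q2 ltac:(lra)).
  apply Rdiv_le_0_compat; nra.
Qed.

Lemma rho_sub_le q1 q2 x y : 0 < q1 -> q1 <= x -> x <= y -> y <= q2 ->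
  rho y - rho x <= rho_lip_const q1 q2 * (y - x).
Proof.
  intros Hq1 Hx Hxy Hy.
  pose proof (eta_pos q1 Hq1) as He1; pose proof B_nonneg.
  pose proof (eta_incr q1 x Hq1 Hx); pose proof (eta_incr x y ltac:(lra) Hxy).
  pose proof (eta_incr y q2 ltac:(lra) Hy).
  set (D := B * rho q2 / eta q1).
  assert (HD : 0 <= D) by (pose proof (rho_pos q2 ltac:(lra)); apply Rdiv_le_0_compat; nra).
  assert (HrhoE : D * eta x - rhoE (eta x) <= D * eta y - rhoE (eta y)).
  { apply (incr_of_derive_nonneg (fun e => D * e - rhoE e)
             (fun e => D - index_fun rhoE e * rhoE e / e)); [lra | |].
    - intros e He; apply (is_derive_minus (fun e => D * e) rhoE).
      + auto_derive; [easy | ring].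
      + apply is_derive_rhoE; lra.
    - intros e He; destruct (index_bounds e ltac:(lra)).
      pose proof (rhoE_pos e ltac:(lra)).
      assert (rhoE e <= rho q2) by (rewrite <- (rhoE_eta q2) by lra; apply rhoE_incr; lra).
      assert (index_fun rhoE e * rhoE e / e <= index_fun rhoE e * rhoE e / eta q1)
        by (apply Rmult_le_compat_l; [nra | apply Rinv_le_contravar; lra]).
      assert (index_fun rhoE e * rhoE e / eta q1 <= D)
        by (unfold D, Rdiv; apply Rmult_le_compat_r; [left; apply Rinv_0_lt_compat; lra | nra]).
      lra. }
  rewrite <- !rhoE_eta by lra.
  pose proof (eta_sub_le x y ltac:(lra) Hxy).
  pose proof (rho_pos q1 Hq1); pose proof (rho_incr q1 x Hq1 Hx).
  assert ((y - x) / rho x <= (y - x) / rho q1)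
    by (apply Rmult_le_compat_l; [lra | apply Rinv_le_contravar; lra]).
  replace (rho_lip_const q1 q2 * (y - x)) with (D * ((y - x) / rho q1))
    by (unfold rho_lip_const, D; field; lra).
  assert (D * (eta y - eta x) <= D * ((y - x) / rho q1)) by (apply Rmult_le_compat_l; lra).
  lra.
Qed.

Lemma rho_lipschitz q1 q2 x y : 0 < q1 -> q1 <= x <= q2 -> q1 <= y <= q2 ->
  Rabs (rho x - rho y) <= rho_lip_const q1 q2 * Rabs (x - y).
Proof.
  intros Hq1 Hx Hy.
  destruct (Rle_lt_dec x y) as [Hxy | Hxy].
  - pose proof (rho_sub_le q1 q2 x y Hq1 ltac:(lra) Hxy ltac:(lra)).
    pose proof (rho_incr x y ltac:(lra) Hxy).
    rewrite !Rabs_left1 by lra; lra.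
  - pose proof (rho_sub_le q1 q2 y x Hq1 ltac:(lra) ltac:(lra) ltac:(lra)).
    pose proof (rho_incr y x ltac:(lra) ltac:(lra)).
    rewrite !Rabs_right by lra; lra.
Qed.

Lemma rho_continuous q : 0 < q -> continuous rho q.
Proof.
  intros Hq; apply (continuous_of_local_lipschitz _ q (rho_lip_const (q / 2) (2 * q)) (q / 2));
    [lra|].
  intros y Hy; apply Rabs_def2 in Hy; apply rho_lipschitz; lra.
Qed.

Lemma is_derive_eta q : 0 < q -> is_derive eta q (/ rho q).
Proof.
  intros Hq.
  assert (Hd : is_derive (fun y => eta y - eta (q / 2)) q (/ rho q)).
  { apply (is_derive_RInt (fun x => / rho x) _ (q / 2)).
    - exists (mkposreal (q / 2) ltac:(lra)); intros y Hy.
      change (Rabs (y - q) < q / 2) in Hy; apply Rabs_def2 in Hy.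
      apply is_RInt_eta; lra.
    - apply continuous_Rinv_comp; [now apply rho_continuous | pose proof (rho_pos q Hq); lra]. }
  apply (is_derive_ext (fun y => eta y - eta (q / 2) + eta (q / 2)) eta);
    [intros t; change (eta t - eta (q / 2) + eta (q / 2) = eta t :> R); ring|].
  replace (/ rho q) with (/ rho q + 0) by ring.
  apply (is_derive_plus (fun y => eta y - eta (q / 2))); [exact Hd|].
  exact (is_derive_const (K := R_AbsRing) (V := R_NormedModule) _ q).
Qed.

Section FluidSolution.

Variables (m p : R -> R) (r0 : R) (Rb : Rbar).
Hypothesis sol : fluid_solution rho m p r0 Rb.

Lemma fluid_at r : r0 < r -> Rbar_lt r Rb ->
  0 < p r /\ 0 < m r /\ is_derive m r (4 * PI * r ^ 2 * rho (p r)) /\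
  is_derive p r (- (m r * rho (p r)) / r ^ 2).
Proof. destruct sol as (_ & _ & Hs); apply Hs. Qed.

Lemma fluid_radius_pos r : r0 < r -> 0 < r.
Proof. destruct sol as (Hr0 & _); lra. Qed.

Lemma fluid_between x y z : r0 < x -> x <= z <= y -> Rbar_lt y Rb -> r0 < z /\ Rbar_lt z Rb.
Proof. intros Hx Hz Hy; split; [lra | eapply Rbar_le_lt_trans; [|exact Hy]; simpl; lra]. Qed.

Lemma mass_incr x y : r0 < x -> x <= y -> Rbar_lt y Rb -> m x <= m y.
Proof.
  intros Hx Hxy Hy.
  apply (incr_of_derive_nonneg m (fun r => 4 * PI * r ^ 2 * rho (p r))); [exact Hxy | |];
    intros z Hz; destruct (fluid_between x y z Hx Hz Hy) as [Hz0 HzR];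
    destruct (fluid_at z Hz0 HzR) as (Hp & _ & Hdm & _); [exact Hdm|].
  pose proof (rho_pos _ Hp); pose proof PI_RGT_0; pose proof (pow2_ge_0 z).
  apply Rmult_le_pos; [|lra]; apply Rmult_le_pos; lra.
Qed.

Lemma pressure_decr x y : r0 < x -> x <= y -> Rbar_lt y Rb -> p y <= p x.
Proof.
  intros Hx Hxy Hy.
  apply (decr_of_derive_nonpos p (fun r => - (m r * rho (p r)) / r ^ 2)); [exact Hxy | |];
    intros z Hz; destruct (fluid_between x y z Hx Hz Hy) as [Hz0 HzR];
    destruct (fluid_at z Hz0 HzR) as (Hp & Hm & _ & Hdp); [exact Hdp|].
  pose proof (rho_pos _ Hp); assert (0 < z ^ 2) by (apply pow_lt, fluid_radius_pos; lra).
  rewrite Rdiv_opp_l; enough (0 <= m z * rho (p z) / z ^ 2) by lra.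
  apply Rdiv_le_0_compat; nra.
Qed.

Lemma is_derive_eta_pressure r : r0 < r -> Rbar_lt r Rb ->
  is_derive (fun s => eta (p s)) r (- m r / r ^ 2).
Proof.
  intros Hr HrR; destruct (fluid_at r Hr HrR) as (Hp & _ & _ & Hdp).
  pose proof (rho_pos _ Hp); pose proof (fluid_radius_pos r Hr).
  replace (- m r / r ^ 2) with (- (m r * rho (p r)) / r ^ 2 * / rho (p r)) by (field; split; lra).
  exact (is_derive_comp eta p r _ _ (is_derive_eta _ Hp) Hdp).
Qed.

Lemma is_derive_mass_rhoE r : r0 < r -> Rbar_lt r Rb ->
  is_derive m r (4 * PI * r ^ 2 * rhoE (eta (p r))).
Proof.
  intros Hr HrR; destruct (fluid_at r Hr HrR) as (Hp & _ & Hdm & _); now rewrite rhoE_eta.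
Qed.

Lemma eta_pressure_decr x y : r0 < x -> x <= y -> Rbar_lt y Rb -> eta (p y) <= eta (p x).
Proof.
  intros Hx Hxy Hy; destruct (fluid_between x y y Hx ltac:(lra) Hy) as [Hy0 HyR].
  apply eta_incr; [apply (fluid_at y Hy0 HyR) | now apply pressure_decr].
Qed.

Lemma is_derive_eta_pressure_sub_mass_ratio r : r0 < r -> Rbar_lt r Rb ->
  is_derive (fun s => eta (p s) - m s / s) r (- (4 * PI * r ^ 2 * rhoE (eta (p r))) / r).
Proof.
  intros Hr HrR; pose proof (fluid_radius_pos r Hr).
  pose proof (is_derive_eta_pressure r Hr HrR) as HE; pose proof (is_derive_mass_rhoE r Hr HrR) as Hm.
  set (E := fun s => eta (p s)) in *.
  change (is_derive (fun s => E s - m s / s) r (- (4 * PI * r ^ 2 * rhoE (E r)) / r)); auto_derive.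
  - repeat split; [now exists (- m r / r ^ 2) | now exists (4 * PI * r ^ 2 * rhoE (E r)) | lra].
  - replace (Derive (fun x : R => E x) r) with (- m r / r ^ 2)
      by (symmetry; now apply is_derive_unique).
    replace (Derive (fun x : R => m x) r) with (4 * PI * r ^ 2 * rhoE (E r))
      by (symmetry; now apply is_derive_unique).
    field; lra.
Qed.

End FluidSolution.

Lemma mass_ratio_le_eta_pressure m p r0 : fluid_solution rho m p r0 p_infty ->
  forall r, r0 < r -> m r / r <= eta (p r).
Proof.
  intros sol r2 Hr2; apply Rnot_lt_le; intros Hneg.
  set (f := fun s => eta (p s) - m s / s).
  assert (Hfr2 : f r2 < 0) by (unfold f; lra).
  destruct (exists_nonpos_of_derive_le_neg (fun s => s * eta (p s)) f r2 (- f r2)) as [r [Hr Hv]];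
    [lra | | |].
  - intros s Hs; pose proof (fluid_radius_pos m p r0 _ sol s ltac:(lra)).
    pose proof (is_derive_eta_pressure m p r0 _ sol s ltac:(lra) I) as HE.
    set (E := fun s => eta (p s)) in *; unfold f.
    change (is_derive (fun s => s * E s) s (E s - m s / s)); auto_derive; [now exists (- m s / s ^ 2)|].
    replace (Derive (fun x : R => E x) s) with (- m s / s ^ 2)
      by (symmetry; now apply is_derive_unique).
    field; lra.
  - intros s Hs; enough (f s <= f r2) by lra.
    apply (decr_of_derive_nonpos f (fun s => - (4 * PI * s ^ 2 * rhoE (eta (p s))) / s)); [exact Hs | |];
      intros z Hz; [apply (is_derive_eta_pressure_sub_mass_ratio m p r0 _ sol); [lra | exact I]|].
    pose proof (fluid_radius_pos m p r0 _ sol z ltac:(lra)); pose proof (four_pi_sq_nonneg z).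
    pose proof (rhoE_pos _ (eta_pos _ (proj1 (fluid_at m p r0 _ sol z ltac:(lra) I)))).
    rewrite Rdiv_opp_l; enough (0 <= 4 * PI * z ^ 2 * rhoE (eta (p z)) / z) by lra.
    apply Rdiv_le_0_compat; [apply Rmult_le_pos|]; lra.
  - pose proof (fluid_radius_pos m p r0 _ sol r ltac:(lra)).
    pose proof (eta_pos _ (proj1 (fluid_at m p r0 _ sol r ltac:(lra) I))); nra.
Qed.

Section LowPressureIndex.

Variables (n0 a0 : R).
Hypothesis n0_le_3 : n0 <= 3.
Hypothesis a0_pos : 0 < a0.
Hypothesis index_near_0 : exists C d, 0 < d /\
  forall e, 0 < e < d -> Rabs (index_fun rhoE e - n0) <= C * Rpower e a0.

Lemma index_sub_3_le_power : exists K, 0 <= K /\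
  forall x, 0 < x -> index_fun rhoE x - 3 <= K * a0 * exp (a0 * ln x).
Proof.
  destruct index_near_0 as (C & d & Hd & HC).
  pose proof B_nonneg as HB.
  set (Rd := exp (a0 * ln d)).
  assert (HRd : 0 < Rd) by apply exp_pos.
  set (K := (Rabs C + B / Rd) / a0).
  assert (HKa : K * a0 = Rabs C + B / Rd) by (unfold K; field; lra).
  assert (HBRd : 0 <= B / Rd) by (apply Rdiv_le_0_compat; lra).
  exists K; split; [unfold K; pose proof (Rabs_pos C); apply Rdiv_le_0_compat; lra|].
  intros x Hx; rewrite HKa; pose proof (exp_pos (a0 * ln x)).
  destruct (Rlt_le_dec x d) as [Hxd | Hxd].
  - specialize (HC x (conj Hx Hxd)); unfold Rpower in HC.
    pose proof (Rle_abs (index_fun rhoE x - n0)); pose proof (Rle_abs C).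
    assert (C * exp (a0 * ln x) <= Rabs C * exp (a0 * ln x)) by (apply Rmult_le_compat_r; lra).
    assert (0 <= B / Rd * exp (a0 * ln x)) by (apply Rmult_le_pos; lra).
    lra.
  - destruct (index_bounds x Hx).
    assert (Rd <= exp (a0 * ln x)).
    { unfold Rd; destruct (Req_dec x d) as [-> | Hne]; [lra|].
      left; apply exp_increasing, Rmult_lt_compat_l, ln_increasing; lra. }
    assert (B <= B / Rd * exp (a0 * ln x))
      by (replace B with (B / Rd * Rd) at 1 by (field; lra); apply Rmult_le_compat_l; lra).
    assert (0 <= Rabs C * exp (a0 * ln x)) by (apply Rmult_le_pos; [apply Rabs_pos | lra]).
    lra.
Qed.

(* ln (rhoE e / e^3) has derivative (n - 3) / e, and n - 3 <= n - n0 = O(e^a0) near 0: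
   so ln (rhoE e / e^3) - K e^a0 is nonincreasing. *)
Lemma rhoE_ge_cube E1 : 0 < E1 -> exists c, 0 < c /\ forall e, 0 < e <= E1 -> c * e ^ 3 <= rhoE e.
Proof.
  intros HE1; destruct index_sub_3_le_power as (K & HK & Hbound).
  set (phi := fun e => ln (rhoE e) - 3 * ln e - K * exp (a0 * ln e)).
  assert (Hphi : forall e, 0 < e -> phi E1 <= phi e -> phi E1 + ln (e ^ 3) <= ln (rhoE e)).
  { intros e He Hle; unfold phi in Hle at 2; rewrite ln_pow by lra; simpl (INR 3).
    assert (0 <= K * exp (a0 * ln e)) by (apply Rmult_le_pos; [lra | left; apply exp_pos]).
    lra. }
  exists (exp (phi E1)); split; [apply exp_pos|].
  intros e [He HeE].
  enough (Hle : phi E1 + ln (e ^ 3) <= ln (rhoE e)).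
  { pose proof (rhoE_pos e He); assert (0 < e ^ 3) by (apply pow_lt; lra).
    destruct Hle as [Hlt | Heq].
    - left; apply exp_increasing in Hlt; rewrite exp_plus, !exp_ln in Hlt; auto.
    - rewrite <- (exp_ln (rhoE e)), <- Heq, exp_plus, exp_ln; auto; lra. }
  apply Hphi; [exact He|].
  apply (decr_of_derive_nonpos phi (fun e => (index_fun rhoE e - 3 - K * a0 * exp (a0 * ln e)) / e));
    [exact HeE | |].
  - intros x Hx; pose proof (rhoE_pos x ltac:(lra)).
    unfold phi; auto_derive.
    + repeat split; [apply rhoE_derivable | | |]; lra.
    + change (Derive (fun y => rhoE y) x) with (Derive rhoE x); unfold index_fun.
      field; lra.
  - intros x Hx; specialize (Hbound x ltac:(lra)).
    assert (0 < / x) by (apply Rinv_0_lt_compat; lra).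
    unfold Rdiv; nra.
Qed.


Lemma fluid_radius_not_infinite m p r0 : ~ fluid_solution rho m p r0 p_infty.
Proof.
  intros sol.
  set (r1 := r0 + 1).
  assert (Hr1 : 0 < r1) by exact (fluid_radius_pos m p r0 _ sol r1 ltac:(unfold r1; lra)).
  destruct (rhoE_ge_cube (eta (p r1)) (eta_pos _ (proj1 (fluid_at m p r0 _ sol r1 ltac:(unfold r1; lra) I))))
    as [c [Hc Hcube]].
  apply (cubic_growth_blowup m (fun r => 4 * PI * r ^ 2 * rhoE (eta (p r))) r1 (4 * PI * c));
    [exact Hr1 | pose proof PI_RGT_0; nra | | |]; intros r Hr; unfold r1 in Hr.
  - apply (is_derive_mass_rhoE m p r0 _ sol); [lra | exact I].
  - apply (fluid_at m p r0 _ sol); [lra | exact I].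
  - destruct (fluid_at m p r0 _ sol r ltac:(lra) I) as (Hp & Hm & _).
    pose proof (fluid_radius_pos m p r0 _ sol r ltac:(lra)).
    pose proof (mass_ratio_le_eta_pressure m p r0 sol r ltac:(lra)).
    assert (0 < m r / r) by (apply Rdiv_lt_0_compat; lra).
    assert (HE : eta (p r) <= eta (p r1))
      by (apply (eta_pressure_decr m p r0 _ sol); [unfold r1; lra | unfold r1; lra | exact I]).
    assert (Hcube_le : c * (m r / r) ^ 3 <= rhoE (eta (p r))).
    { apply Rle_trans with (c * eta (p r) ^ 3);
        [apply Rmult_le_compat_l; [lra | apply pow_incr; lra] | apply Hcube; split; [apply eta_pos, Hp | exact HE]]. }
    replace (4 * PI * c * m r ^ 3 / r) with (4 * PI * r ^ 2 * (c * (m r / r) ^ 3)) by (field; lra).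
    apply Rmult_le_compat_l; [apply four_pi_sq_nonneg | exact Hcube_le].
Qed.

End LowPressureIndex.

Lemma fluid_solution_glue (m p X Q : R -> R) r0 a Rr R2 : r0 < a < Rr -> Rr < R2 ->
  fluid_solution rho m p r0 (Finite Rr) ->
  (forall r, a < r < R2 -> 0 < Q r /\ 0 < X r /\ is_derive X r (4 * PI * r ^ 2 * rho (Q r)) /\
     is_derive Q r (- (X r * rho (Q r)) / r ^ 2)) ->
  (forall r, a < r < Rr -> X r = m r /\ Q r = p r) ->
  fluid_solution rho (fun r => if Rlt_dec r Rr then m r else X r)
                     (fun r => if Rlt_dec r Rr then p r else Q r) r0 (Finite R2).
Proof.
  intros Ha HR2 sol HXQ Hagree.
  destruct sol as (Hr0 & _ & Hsol).
  split; [exact Hr0|]; split; [simpl; lra|]; intros r Hr HrR; simpl in HrR.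
  destruct (Rlt_dec r Rr) as [Hlt | Hge].
  - assert (Hloc : locally r (fun y => m y = (if Rlt_dec y Rr then m y else X y) /\
                                       p y = (if Rlt_dec y Rr then p y else Q y))).
    { generalize (locally_open_interval r r0 Rr ltac:(lra)); apply filter_imp.
      intros y Hy; destruct (Rlt_dec y Rr); [easy | lra]. }
    destruct (Hsol r Hr Hlt) as (Hp & Hm & Hdm & Hdp).
    split; [exact Hp|]; split; [exact Hm|]; split;
      [apply (is_derive_ext_loc m) | apply (is_derive_ext_loc p)]; try assumption;
      (eapply filter_imp; [|exact Hloc]; simpl; tauto).
  - assert (Hloc : locally r (fun y => X y = (if Rlt_dec y Rr then m y else X y) /\
                                       Q y = (if Rlt_dec y Rr then p y else Q y))).
    { generalize (locally_open_interval r a R2 ltac:(lra)); apply filter_imp.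
      intros y Hy; destruct (Rlt_dec y Rr); [apply Hagree; lra | easy]. }
    destruct (HXQ r ltac:(lra)) as (Hp & Hm & Hdm & Hdp).
    split; [exact Hp|]; split; [exact Hm|]; split;
      [apply (is_derive_ext_loc X) | apply (is_derive_ext_loc Q)]; try assumption;
      (eapply filter_imp; [|exact Hloc]; simpl; tauto).
Qed.

Section ClampedField.

Variables (L P Mb a1 bb : R).
Hypothesis L_pos : 0 < L.
Hypothesis L_le_P : L <= P.
Hypothesis Mb_pos : 0 < Mb.
Hypothesis a1_pos : 0 < a1.
Hypothesis a1_le_bb : a1 <= bb.

(* Outside a box around the solution the fluid equations are frozen, which makes them
   globally bounded and Lipschitz as Picard's theorem requires. *)
Definition rho_clamped q := rho (clamp (L / 2) (2 * P) q).

Definition field_m (s x q : R) := 4 * PI * clamp a1 bb s ^ 2 * rho_clamped q.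
Definition field_p (s x q : R) := - (clamp 0 (2 * Mb) x * rho_clamped q) / clamp a1 bb s ^ 2.

Definition field_bound := 4 * PI * bb ^ 2 * rho (2 * P) + 2 * Mb * rho (2 * P) / a1 ^ 2.
Definition field_lip :=
  4 * PI * bb ^ 2 * rho_lip_const (L / 2) (2 * P)
  + (rho (2 * P) + 2 * Mb * rho_lip_const (L / 2) (2 * P)) / a1 ^ 2.

Lemma rho_clamped_bounds q : 0 < rho_clamped q <= rho (2 * P).
Proof.
  unfold rho_clamped; pose proof (clamp_between (L / 2) (2 * P) q ltac:(lra)).
  split; [apply rho_pos | apply rho_incr]; lra.
Qed.

Lemma rho_clamped_lipschitz q q' :
  Rabs (rho_clamped q - rho_clamped q') <= rho_lip_const (L / 2) (2 * P) * Rabs (q - q').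
Proof.
  unfold rho_clamped.
  pose proof (clamp_between (L / 2) (2 * P) q ltac:(lra)).
  pose proof (clamp_between (L / 2) (2 * P) q' ltac:(lra)).
  eapply Rle_trans; [apply (rho_lipschitz (L / 2) (2 * P)); lra|].
  apply Rmult_le_compat_l; [apply rho_lip_const_nonneg; lra | apply clamp_lipschitz; lra].
Qed.

Lemma clamp_radius_sq_bounds s : a1 ^ 2 <= clamp a1 bb s ^ 2 <= bb ^ 2.
Proof. pose proof (clamp_between a1 bb s a1_le_bb); split; apply pow_incr; lra. Qed.

Lemma field_parts_nonneg : 0 <= 4 * PI * bb ^ 2 * rho (2 * P) /\ 0 <= 2 * Mb * rho (2 * P) / a1 ^ 2 /\
  0 <= rho_lip_const (L / 2) (2 * P) /\ 0 < a1 ^ 2.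
Proof.
  pose proof PI_RGT_0; pose proof (rho_pos (2 * P) ltac:(lra)); pose proof (pow2_ge_0 bb).
  assert (0 < a1 ^ 2) by (apply pow_lt; lra).
  assert (0 <= 4 * PI * bb ^ 2) by nra.
  refine (conj _ (conj _ (conj _ _)));
    [nra | apply Rdiv_le_0_compat; nra | apply rho_lip_const_nonneg; lra | lra].
Qed.

Lemma field_m_bounded s x q : Rabs (field_m s x q) <= field_bound.
Proof.
  unfold field_m, field_bound; pose proof (rho_clamped_bounds q); pose proof (clamp_radius_sq_bounds s).
  pose proof field_parts_nonneg as (Hb1 & Hb2 & _); pose proof PI_RGT_0.
  rewrite Rabs_right by (apply Rle_ge; pose proof (pow2_ge_0 (clamp a1 bb s)); apply Rmult_le_pos; nra).
  assert (4 * PI * clamp a1 bb s ^ 2 * rho_clamped q <= 4 * PI * bb ^ 2 * rho (2 * P))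
    by (apply Rmult_le_compat; try nra; pose proof (pow2_ge_0 (clamp a1 bb s)); nra).
  lra.
Qed.

Lemma field_p_bounded s x q : Rabs (field_p s x q) <= field_bound.
Proof.
  unfold field_p, field_bound; pose proof (rho_clamped_bounds q); pose proof (clamp_radius_sq_bounds s).
  pose proof (clamp_between 0 (2 * Mb) x ltac:(lra)).
  pose proof field_parts_nonneg as (Hb1 & Hb2 & _ & Ha1).
  rewrite Rdiv_opp_l, Rabs_Ropp, Rabs_right by (apply Rle_ge, Rdiv_le_0_compat; nra).
  assert (clamp 0 (2 * Mb) x * rho_clamped q / clamp a1 bb s ^ 2 <= 2 * Mb * rho (2 * P) / a1 ^ 2).
  { unfold Rdiv; apply Rmult_le_compat; [nra | left; apply Rinv_0_lt_compat; lra | nra |].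
    apply Rinv_le_contravar; lra. }
  lra.
Qed.

Lemma field_m_lipschitz s x q x' q' :
  Rabs (field_m s x q - field_m s x' q') <= field_lip * (Rabs (x - x') + Rabs (q - q')).
Proof.
  unfold field_m, field_lip; pose proof (clamp_radius_sq_bounds s); pose proof PI_RGT_0.
  pose proof field_parts_nonneg as (_ & _ & HKr & Ha1).
  pose proof (rho_clamped_bounds q); pose proof (rho_clamped_lipschitz q q').
  pose proof (Rabs_pos (x - x')); pose proof (Rabs_pos (q - q')); pose proof (pow2_ge_0 (clamp a1 bb s)).
  replace (4 * PI * clamp a1 bb s ^ 2 * rho_clamped q - 4 * PI * clamp a1 bb s ^ 2 * rho_clamped q')
    with (4 * PI * clamp a1 bb s ^ 2 * (rho_clamped q - rho_clamped q')) by ring.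
  rewrite Rabs_mult, (Rabs_right (4 * PI * _)) by (apply Rle_ge; nra).
  set (Kr := rho_lip_const (L / 2) (2 * P)) in *.
  assert (4 * PI * clamp a1 bb s ^ 2 * Rabs (rho_clamped q - rho_clamped q')
          <= 4 * PI * bb ^ 2 * (Kr * Rabs (q - q')))
    by (apply Rmult_le_compat; try nra; apply Rabs_pos).
  assert (0 <= (rho (2 * P) + 2 * Mb * Kr) / a1 ^ 2 * (Rabs (x - x') + Rabs (q - q'))).
  { apply Rmult_le_pos; [apply Rdiv_le_0_compat; nra | lra]. }
  assert (0 <= 4 * PI * bb ^ 2 * Kr * Rabs (x - x'))
    by (pose proof (four_pi_sq_nonneg bb); apply Rmult_le_pos; [apply Rmult_le_pos|]; lra).
  lra.
Qed.

Lemma field_p_lipschitz s x q x' q' :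
  Rabs (field_p s x q - field_p s x' q') <= field_lip * (Rabs (x - x') + Rabs (q - q')).
Proof.
  unfold field_p, field_lip; pose proof (clamp_radius_sq_bounds s); pose proof PI_RGT_0.
  pose proof field_parts_nonneg as (_ & _ & HKr & Ha1).
  pose proof (rho_clamped_bounds q); pose proof (rho_clamped_lipschitz q q').
  set (Kr := rho_lip_const (L / 2) (2 * P)) in *.
  set (c2 := clamp a1 bb s ^ 2) in *.
  pose proof (clamp_between 0 (2 * Mb) x' ltac:(lra)).
  pose proof (clamp_lipschitz 0 (2 * Mb) x x' ltac:(lra)).
  pose proof (Rabs_pos (x - x')); pose proof (Rabs_pos (q - q')).
  assert (Hnum : Rabs (clamp 0 (2 * Mb) x * rho_clamped q - clamp 0 (2 * Mb) x' * rho_clamped q')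
                 <= (rho (2 * P) + 2 * Mb * Kr) * (Rabs (x - x') + Rabs (q - q'))).
  { eapply Rle_trans; [apply (Rabs_mult_sub_le _ _ _ _ (2 * Mb) (rho (2 * P)))|];
      [rewrite Rabs_right; lra | rewrite Rabs_right; lra |].
    assert (rho (2 * P) * Rabs (clamp 0 (2 * Mb) x - clamp 0 (2 * Mb) x') <= rho (2 * P) * Rabs (x - x'))
      by (apply Rmult_le_compat_l; lra).
    assert (0 <= rho (2 * P) * Rabs (q - q')) by nra.
    assert (0 <= 2 * Mb * Kr * Rabs (x - x')) by (apply Rmult_le_pos; nra).
    assert (2 * Mb * Rabs (rho_clamped q - rho_clamped q') <= 2 * Mb * (Kr * Rabs (q - q')))
      by (apply Rmult_le_compat_l; lra).
    lra. }
  replace (- (clamp 0 (2 * Mb) x * rho_clamped q) / c2 - - (clamp 0 (2 * Mb) x' * rho_clamped q') / c2)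
    with (- (clamp 0 (2 * Mb) x * rho_clamped q - clamp 0 (2 * Mb) x' * rho_clamped q') / c2)
    by (field; lra).
  rewrite Rdiv_opp_l, Rabs_Ropp; unfold Rdiv; rewrite Rabs_mult, Rabs_inv, (Rabs_right c2) by lra.
  assert (Rabs (clamp 0 (2 * Mb) x * rho_clamped q - clamp 0 (2 * Mb) x' * rho_clamped q') * / c2
          <= (rho (2 * P) + 2 * Mb * Kr) * (Rabs (x - x') + Rabs (q - q')) * / a1 ^ 2)
    by (apply Rmult_le_compat;
        [apply Rabs_pos | left; apply Rinv_0_lt_compat; lra | exact Hnum | apply Rinv_le_contravar; lra]).
  assert (0 <= 4 * PI * bb ^ 2 * Kr * (Rabs (x - x') + Rabs (q - q')))
    by (pose proof (four_pi_sq_nonneg bb); apply Rmult_le_pos; [apply Rmult_le_pos|]; lra).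
  unfold Rdiv in *; nra.
Qed.

Lemma field_m_continuous x q s : continuous (fun s => field_m s x q) s.
Proof.
  unfold field_m; apply (continuous_mult (fun s => 4 * PI * clamp a1 bb s ^ 2) (fun _ => rho_clamped q));
    [|apply continuous_const].
  apply (continuous_mult (fun _ => 4 * PI) (fun s => clamp a1 bb s ^ 2)); [apply continuous_const|].
  apply (continuous_comp (clamp a1 bb) (fun y => y ^ 2)); [now apply clamp_continuous|].
  apply (ex_derive_continuous (V := R_NormedModule)); auto_derive; easy.
Qed.

Lemma field_p_continuous x q s : continuous (fun s => field_p s x q) s.
Proof.
  unfold field_p.
  apply (continuous_mult (fun _ => - (clamp 0 (2 * Mb) x * rho_clamped q)) (fun s => / clamp a1 bb s ^ 2));
    [apply continuous_const|].
  apply (continuous_comp (clamp a1 bb) (fun y => / y ^ 2)); [now apply clamp_continuous|].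
  pose proof (clamp_between a1 bb s a1_le_bb).
  apply (ex_derive_continuous (V := R_NormedModule)); auto_derive; nra.
Qed.

Lemma field_m_eq s x q : a1 <= s <= bb -> L / 2 <= q <= 2 * P -> field_m s x q = 4 * PI * s ^ 2 * rho q.
Proof. intros Hs Hq; unfold field_m, rho_clamped; now rewrite !clamp_id. Qed.

Lemma field_p_eq s x q : a1 <= s <= bb -> L / 2 <= q <= 2 * P -> 0 <= x <= 2 * Mb ->
  field_p s x q = - (x * rho q) / s ^ 2.
Proof. intros Hs Hq Hx; unfold field_p, rho_clamped; now rewrite !clamp_id. Qed.

End ClampedField.

Section FluidExtension.

Variables (m p : R -> R) (r0 Rr L Mb : R).
Hypothesis sol : fluid_solution rho m p r0 (Finite Rr).
Hypothesis L_pos : 0 < L.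
Hypothesis pressure_ge : forall r, r0 < r < Rr -> L <= p r.
Hypothesis mass_le : forall r, r0 < r < Rr -> m r <= Mb.

Let a1 := (r0 + Rr) / 2.
Let P := p a1.
Let bb := Rr + 1.
Let Fm := field_m L P a1 bb.
Let Fp := field_p L P Mb a1 bb.
Let Gm := field_bound P Mb a1 bb.
Let K := field_lip L P Mb a1 bb.
Let h := Rmin 1 (/ (4 * (K + 1))).
(* starting within h / 2 of Rr makes the Picard interval [a, a + h] reach past Rr *)
Let a := Rmax a1 (Rr - h / 2).

Lemma ext_r0_lt_Rr : 0 <= r0 < Rr.
Proof. destruct sol as (Hr0 & HRr & _); simpl in HRr; lra. Qed.

Lemma ext_box s : a1 <= s < Rr -> L <= p s <= P /\ 0 < m s <= Mb.
Proof.
  intros Hs; pose proof ext_r0_lt_Rr; unfold a1 in *.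
  split; [split; [apply pressure_ge; lra | apply (pressure_decr m p r0 (Finite Rr) sol); simpl; lra]|].
  split; [apply (fluid_at m p r0 (Finite Rr) sol); simpl; lra | apply mass_le; lra].
Qed.

Lemma ext_params : L <= P /\ 0 < Mb /\ 0 < a1 <= bb.
Proof.
  pose proof ext_r0_lt_Rr; destruct (ext_box a1) as [[HL _] [Hm HM]]; [unfold a1; lra|].
  unfold P, bb, a1 in *; repeat split; lra.
Qed.

Lemma ext_K_nonneg : 0 <= K.
Proof.
  destruct ext_params as (HLP & HMb & Ha1 & Ha1b).
  exact (G_lipschitz_nonneg Fm K (field_m_lipschitz L P Mb a1 bb L_pos HLP HMb Ha1 Ha1b)).
Qed.

Lemma ext_h_pos : 0 < h.
Proof. pose proof ext_K_nonneg; unfold h; apply Rmin_pos; [lra | apply Rinv_0_lt_compat; lra]. Qed.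

Lemma ext_Kh : K * h <= 1 / 4.
Proof.
  pose proof ext_K_nonneg.
  apply Rle_trans with (K * / (4 * (K + 1))); [apply Rmult_le_compat_l; [lra | apply Rmin_r]|].
  apply (Rmult_le_reg_r (4 * (K + 1))); [lra|].
  rewrite Rmult_assoc, Rinv_l by lra; lra.
Qed.

Lemma ext_start : a1 <= a < Rr /\ Rr < a + h /\ a + h <= bb.
Proof.
  pose proof ext_r0_lt_Rr; pose proof ext_h_pos; assert (h <= 1) by apply Rmin_l.
  unfold a, a1, bb, Rmax; destruct Rle_dec; lra.
Qed.


Lemma ext_Fm_bounded s x q : Rabs (Fm s x q) <= Gm.
Proof. destruct ext_params as (? & ? & ? & ?); now apply field_m_bounded. Qed.

Lemma ext_Fp_bounded s x q : Rabs (Fp s x q) <= Gm.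
Proof. destruct ext_params as (? & ? & ? & ?); now apply field_p_bounded. Qed.

Lemma ext_Fm_lipschitz s x q x' q' : Rabs (Fm s x q - Fm s x' q') <= K * (Rabs (x - x') + Rabs (q - q')).
Proof. destruct ext_params as (? & ? & ? & ?); now apply field_m_lipschitz. Qed.

Lemma ext_Fp_lipschitz s x q x' q' : Rabs (Fp s x q - Fp s x' q') <= K * (Rabs (x - x') + Rabs (q - q')).
Proof. destruct ext_params as (? & ? & ? & ?); now apply field_p_lipschitz. Qed.

Lemma ext_Fm_continuous x q s : continuous (fun s => Fm s x q) s.
Proof. destruct ext_params as (? & ? & ? & ?); now apply field_m_continuous. Qed.

Lemma ext_Fp_continuous x q s : continuous (fun s => Fp s x q) s.
Proof. destruct ext_params as (? & ? & ? & ?); now apply field_p_continuous. Qed.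

Lemma ext_fluid_continuous_on t : t < Rr -> pair_continuous_on a (m, p) t.
Proof.
  intros Ht; pose proof ext_start; pose proof ext_r0_lt_Rr.
  split; intros s Hs; simpl; apply (ex_derive_continuous (V := R_NormedModule));
    destruct (fluid_at m p r0 (Finite Rr) sol s) as (_ & _ & Hdm & Hdp); unfold a1 in *; simpl; try lra;
    [now exists (4 * PI * s ^ 2 * rho (p s)) | now exists (- (m s * rho (p s)) / s ^ 2)].
Qed.

Lemma ext_fluid_fixed t : t < Rr -> picard_fixed Fm Fp a (m a) (p a) (m, p) t.
Proof.
  intros Ht s Hs; pose proof ext_start; pose proof ext_r0_lt_Rr.
  destruct (ext_fluid_continuous_on s ltac:(lra)) as [Hm Hp].
  assert (Hfluid : forall u, a <= u <= s ->
            is_derive m u (Fm u (m u) (p u)) /\ is_derive p u (Fp u (m u) (p u))).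
  { intros u Hu; destruct (ext_box u ltac:(lra)) as [[HL HP] [Hm0 HM]].
    destruct ext_params as (HLP & HMb & Ha1 & Ha1b).
    destruct (fluid_at m p r0 (Finite Rr) sol u) as (_ & _ & Hdm & Hdp); unfold a1 in *; simpl; try lra.
    unfold Fm, Fp; rewrite field_m_eq, field_p_eq by (unfold bb in *; lra); auto. }
  split; simpl.
  - exact (integral_eq_of_derive Fm K ext_Fm_lipschitz ext_Fm_continuous m m p a s ltac:(lra) Hm Hp
             (fun u Hu => proj1 (Hfluid u Hu))).
  - exact (integral_eq_of_derive Fp K ext_Fp_lipschitz ext_Fp_continuous p m p a s ltac:(lra) Hm Hp
             (fun u Hu => proj2 (Hfluid u Hu))).
Qed.

Let XQ := picard_sol Fm Fp a (m a) (p a) h.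
Let XQ_continuous := picard_sol_continuous Fm Fp Gm K a (m a) (p a) h ext_Fm_bounded ext_Fp_bounded
  ext_Fm_lipschitz ext_Fp_lipschitz ext_Fm_continuous ext_Fp_continuous ext_h_pos ext_Kh.
Let XQ_lipschitz := picard_sol_lipschitz Fm Fp Gm K a (m a) (p a) h ext_Fm_bounded ext_Fp_bounded
  ext_Fm_lipschitz ext_Fp_lipschitz ext_Fm_continuous ext_Fp_continuous ext_h_pos ext_Kh.
Let XQ_fixed := picard_sol_fixed Fm Fp Gm K a (m a) (p a) h ext_Fm_bounded ext_Fp_bounded
  ext_Fm_lipschitz ext_Fp_lipschitz ext_Fm_continuous ext_Fp_continuous ext_h_pos ext_Kh.
Let XQ_derive := picard_sol_derive Fm Fp Gm K a (m a) (p a) h ext_Fm_bounded ext_Fp_bounded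
  ext_Fm_lipschitz ext_Fp_lipschitz ext_Fm_continuous ext_Fp_continuous ext_h_pos ext_Kh.

Lemma ext_agree t : a <= t < Rr -> fst XQ t = m t /\ snd XQ t = p t.
Proof.
  intros Ht; pose proof ext_start.
  apply (picard_fixed_unique Fm Fp Gm K a (m a) (p a) h ext_Fm_bounded ext_Fp_bounded ext_Fm_lipschitz
           ext_Fp_lipschitz ext_Fm_continuous ext_Fp_continuous ext_Kh XQ (m, p) t); [lra | | | | | lra].
  - split; intros s _; [exact (proj1 (XQ_continuous s)) | exact (proj2 (XQ_continuous s))].
  - apply ext_fluid_continuous_on; lra.
  - intros s Hs; apply XQ_fixed; lra.
  - apply ext_fluid_fixed; lra.
Qed.

Lemma ext_exit : exists R2, Rr < R2 <= a + h /\
  forall t, a <= t < R2 -> L / 2 <= snd XQ t <= 2 * P /\ 0 < fst XQ t <= 2 * Mb.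
Proof.
  pose proof ext_start; pose proof ext_r0_lt_Rr; destruct ext_params as (HLP & HMb & _).
  assert (r0 < a1) by (unfold a1; lra).
  assert (Hma : 0 < m a <= Mb) by (apply ext_box; lra).
  assert (HGm : 0 <= Gm) by exact (G_bound_nonneg Fm Gm ext_Fm_bounded).
  set (delta := Rmin L (m a)).
  assert (Hdelta : 0 < delta /\ delta <= L /\ delta <= m a)
    by (unfold delta; repeat split; [apply Rmin_pos | apply Rmin_l | apply Rmin_r]; lra).
  set (eps := Rmin (a + h - Rr) (delta / (4 * (Gm + 1)))).
  assert (Heps : 0 < eps) by (unfold eps; apply Rmin_pos; [lra | apply Rdiv_lt_0_compat; lra]).
  assert (Heps_h : eps <= a + h - Rr) by apply Rmin_l.
  assert (Heps_delta : 2 * (Gm + 1) * (2 * eps) <= delta).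
  { assert (Hle : 4 * (Gm + 1) * eps <= 4 * (Gm + 1) * (delta / (4 * (Gm + 1))))
      by (apply Rmult_le_compat_l; [lra | apply Rmin_r]).
    replace (4 * (Gm + 1) * (delta / (4 * (Gm + 1)))) with delta in Hle by (field; lra).
    lra. }
  exists (Rr + eps); split; [lra|]; intros t Ht.
  destruct (Rlt_le_dec t Rr) as [Hlt | Hge].
  - destruct (ext_agree t ltac:(lra)) as [-> ->].
    destruct (ext_box t ltac:(lra)) as [[HL HP] [Hm HM]]; unfold P in *; lra.
  - set (s := Rmax a (Rr - eps)).
    assert (Hs : a <= s < Rr /\ s <= t /\ t - s < 2 * eps) by (unfold s, Rmax; destruct Rle_dec; lra).
    destruct (ext_agree s ltac:(lra)) as [Xs Qs].
    destruct (ext_box s ltac:(lra)) as [[HL HP] [Hm HM]].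
    assert (Hms : m a <= m s) by (apply (mass_incr m p r0 (Finite Rr) sol); simpl; lra).
    destruct (XQ_lipschitz t s) as [L1 L2]; fold XQ in L1, L2.
    rewrite (Rabs_right (t - s)) in L1, L2 by lra.
    assert ((Gm + 1) * (t - s) <= (Gm + 1) * (2 * eps)) by (apply Rmult_le_compat_l; lra).
    assert (Gm * (t - s) <= delta / 2) by nra.
    apply Rabs_le_between in L1; apply Rabs_le_between in L2.
    rewrite Xs in L1; rewrite Qs in L2; unfold P in *; lra.
Qed.

Lemma fluid_extension : exists m2 p2 R2, Rr < R2 /\ fluid_solution rho m2 p2 r0 (Finite R2) /\
  forall r, r0 < r -> r < Rr -> m2 r = m r /\ p2 r = p r.
Proof.
  destruct ext_exit as [R2 [HR2 Hexit]]; pose proof ext_start; pose proof ext_r0_lt_Rr.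
  destruct ext_params as (HLP & HMb & _).
  exists (fun r => if Rlt_dec r Rr then m r else fst XQ r),
         (fun r => if Rlt_dec r Rr then p r else snd XQ r), R2.
  split; [lra|]; split.
  - apply (fluid_solution_glue m p (fst XQ) (snd XQ) r0 a Rr R2);
      [unfold a1 in *; lra | lra | exact sol | |].
    + intros r Hr; destruct (Hexit r ltac:(lra)) as [HQ HX].
      destruct (XQ_derive r ltac:(lra)) as [HdX HdQ]; fold XQ in HdX, HdQ.
      unfold Fm, Fp in HdX, HdQ; rewrite field_m_eq in HdX by (unfold bb in *; lra).
      rewrite field_p_eq in HdQ by (unfold bb in *; lra).
      refine (conj _ (conj _ (conj HdX HdQ))); lra.
    + intros r Hr; apply ext_agree; lra.
  - intros r _ Hr; destruct (Rlt_dec r Rr); [easy | lra].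
Qed.

End FluidExtension.

Lemma fluid_mass_bounded m p r0 Rr : fluid_solution rho m p r0 (Finite Rr) ->
  exists Mb, forall r, r0 < r < Rr -> m r <= Mb.
Proof.
  intros sol; pose proof PI_RGT_0.
  assert (HRr : r0 < Rr) by (destruct sol as (_ & HR & _); exact HR).
  set (a1 := (r0 + Rr) / 2).
  assert (Ha1 : r0 < a1 < Rr) by (unfold a1; lra).
  pose proof (fluid_radius_pos m p r0 _ sol a1 (proj1 Ha1)).
  set (Cm := 4 * PI * Rr ^ 2 * rho (p a1)).
  assert (Hp1 : 0 < p a1) by (apply (fluid_at m p r0 (Finite Rr) sol); simpl; lra).
  assert (HCm : 0 <= Cm)
    by (unfold Cm; pose proof (rho_pos _ Hp1); pose proof (four_pi_sq_nonneg Rr);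
        apply Rmult_le_pos; lra).
  exists (m a1 + Cm * Rr); intros r Hr.
  destruct (Rle_lt_dec r a1) as [Hle | Hlt].
  - assert (m r <= m a1) by (apply (mass_incr m p r0 (Finite Rr) sol); simpl; lra).
    assert (0 <= Cm * Rr) by (apply Rmult_le_pos; lra); lra.
  - assert (Cm * a1 - m a1 <= Cm * r - m r).
    { apply (incr_of_derive_nonneg (fun r => Cm * r - m r) (fun r => Cm - 4 * PI * r ^ 2 * rho (p r)));
        [lra | |];
        intros z Hz; destruct (fluid_at m p r0 (Finite Rr) sol z) as (Hpz & _ & Hdm & _); simpl; try lra.
      - apply (is_derive_minus (fun r => Cm * r) m); [auto_derive; [easy | ring] | exact Hdm].
      - assert (rho (p z) <= rho (p a1))
          by (apply rho_incr; [exact Hpz | apply (pressure_decr m p r0 (Finite Rr) sol); simpl; lra]).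
        assert (z ^ 2 <= Rr ^ 2) by (apply pow_incr; pose proof (fluid_radius_pos m p r0 _ sol z); lra).
        pose proof (rho_pos _ Hpz); pose proof (four_pi_sq_nonneg z).
        unfold Cm; enough (4 * PI * z ^ 2 * rho (p z) <= 4 * PI * Rr ^ 2 * rho (p a1)) by lra.
        apply Rmult_le_compat; [lra | lra | | lra].
        apply Rmult_le_compat_l; [pose proof PI_RGT_0; lra | assumption]. }
    assert (Cm * (r - a1) <= Cm * Rr) by (apply Rmult_le_compat_l; lra).
    lra.
Qed.

Lemma maximal_fluid_solution_limits m p r0 Rr : maximal_fluid_solution rho m p r0 (Finite Rr) ->
  filterlim p (at_left Rr) (locally 0) /\ exists M, filterlim m (at_left Rr) (locally M).
Proof.
  intros [sol Hmax].
  assert (HRr : r0 < Rr) by (destruct sol as (_ & HR & _); exact HR).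
  destruct (fluid_mass_bounded m p r0 Rr sol) as [Mb HMb].
  split.
  - apply filterlim_at_left_of_eps; intros eps Heps.
    destruct (classic (exists x, r0 < x < Rr /\ p x < eps)) as [[x [Hx Hpx]] | Hnone].
    + exists x; split; [lra|]; intros y Hy; rewrite Rminus_0_r.
      assert (0 < p y) by (apply (fluid_at m p r0 (Finite Rr) sol); simpl; lra).
      assert (p y <= p x) by (apply (pressure_decr m p r0 (Finite Rr) sol); simpl; lra).
      rewrite Rabs_right; lra.
    + exfalso; apply Hmax.
      destruct (fluid_extension m p r0 Rr eps Mb sol Heps) as (m2 & p2 & R2 & HR2 & sol2 & Hagree);
        [intros r Hr; apply Rnot_lt_le; intros Hlt; apply Hnone; now exists r | exact HMb |].
      exists m2, p2, (Finite R2); split; [exact HR2 | split; [exact sol2|]].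
      intros r Hr HrR; now apply Hagree.
  - apply (filterlim_at_left_incr_bounded m r0 Rr Mb HRr); [|exact HMb].
    intros x y Hx Hxy Hy; apply (mass_incr m p r0 (Finite Rr) sol); simpl; lra.
Qed.

End EquationOfState.

Theorem theorem2 (rho : R -> R) (n0 n1 a0 a1 : R)
  (m p : R -> R) (r0 : R) (Rb : Rbar) :
  EOS rho ->
  asymptotically_polytropic rho n0 n1 a0 a1 ->
  0 <= n0 <= 3 ->
  maximal_fluid_solution rho m p r0 Rb ->
  exists Rr : R,
    Rb = Finite Rr /\
    filterlim p (at_left Rr) (locally 0) /\
    exists M : R, filterlim m (at_left Rr) (locally M).
Proof.
  intros Heos [eta [rhoE (Heta & HrhoE & Honto & Hder & _ & _ & _ & [B HB] & Ha0 & _ & Hnear & _)]]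
    Hn Hmax.
  destruct Rb as [Rr | |].
  - exists Rr; split; [reflexivity|].
    exact (maximal_fluid_solution_limits rho eta rhoE B Heos Heta HrhoE Honto Hder HB m p r0 Rr Hmax).
  - exfalso; destruct Hmax as [sol _].
    exact (fluid_radius_not_infinite rho eta rhoE B Heos Heta HrhoE Honto Hder HB n0 a0 (proj2 Hn)
             Ha0 Hnear m p r0 sol).
  - destruct Hmax as [(_ & [] & _) _].
Qed.
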